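(* There exists a topologically regular compact connected set $K\subseteq\mathbb{R}^2$ whose interior $\mathring K$ is not Whitney regular but such that $C^1_{\mathrm{int}}(K)=C^1(K)=C^1(\mathbb{R}^2|K)$. (For instance, $K=\overline\Omega$ where $\Omega$ is the open unit disc from which pairwise disjoint small closed balls accumulating exactly at the segment $\{0\}\times[-\tfrac12,\tfrac12]$ are removed.)
   Context: $K$ is topologically regular if it is the closure of its interior $\mathring K$. A set $S$ is Whitney regular if there is $C>0$ such that any two points $x,y\in S$ can be joined by a rectifiable path in $S$ of length at most $C|x-y|$. $C^1_{\mathrm{int}}(K)$ is the set of $f\in C^1(\mathring K)$ such that $f$ and $df$ extend continuously to $K$ (identified with these extensions). $C^1(K)$ is the set of $f:K\to\mathbb{R}$ admitting a continuous $df:K\to\mathbb{R}^2$ with $\lim_{y\to x,\,y\in K\setminus\{x\}}\frac{f(y)-f(x)-\langle df(x),y-x\rangle}{|y-x|}=0$ for all $x\in K$. $C^1(\mathbb{R}^2|K)=\{g|_K:g\in C^1(\mathbb{R}^2)\}$. *)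

From Stdlib Require Import Reals Lra List.
Open Scope R_scope.

Definition R2 : Type := (R * R)%type.

Definition dist2 (p q : R2) : R :=
  sqrt ((fst p - fst q) ^ 2 + (snd p - snd q) ^ 2).

Definition inner2 (p q : R2) : R := fst p * fst q + snd p * snd q.

Definition sub2 (p q : R2) : R2 := (fst p - fst q, snd p - snd q).

Definition interior2 (A : R2 -> Prop) (x : R2) : Prop :=
  exists r, 0 < r /\ forall y, dist2 x y < r -> A y.

Definition closure2 (A : R2 -> Prop) (x : R2) : Prop :=
  forall r, 0 < r -> exists y, A y /\ dist2 x y < r.

Definition is_open (U : R2 -> Prop) : Prop := forall x, U x -> interior2 U x.

Definition compact2 (K : R2 -> Prop) : Prop :=
  forall (I : Type) (U : I -> R2 -> Prop),
    (forall i, is_open (U i)) ->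
    (forall x, K x -> exists i, U i x) ->
    exists l : list I, forall x, K x -> exists i, In i l /\ U i x.

Definition connected2 (K : R2 -> Prop) : Prop :=
  forall U V : R2 -> Prop, is_open U -> is_open V ->
    (forall x, K x -> U x \/ V x) ->
    (forall x, K x -> U x -> V x -> False) ->
    (forall x, K x -> U x) \/ (forall x, K x -> V x).

Definition topologically_regular (K : R2 -> Prop) : Prop :=
  forall x, K x <-> closure2 (interior2 K) x.

Fixpoint poly_length (gamma : R -> R2) (t0 : R) (ts : list R) : R :=
  match ts with
  | nil => 0
  | t1 :: ts' => dist2 (gamma t0) (gamma t1) + poly_length gamma t1 ts'
  end.

Fixpoint increasing_from (t0 : R) (ts : list R) : Prop :=
  match ts with
  | nil => True
  | t1 :: ts' => t0 <= t1 /\ increasing_from t1 ts'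
  end.

Definition continuous_path (gamma : R -> R2) : Prop :=
  forall t, 0 <= t <= 1 -> forall eps, 0 < eps -> exists delta, 0 < delta /\
    forall s, 0 <= s <= 1 -> Rabs (s - t) < delta -> dist2 (gamma s) (gamma t) < eps.

(* gamma : [0,1] -> S is a path from x to y, rectifiable of length <= L
   (length = sup of inscribed polygonal lengths). *)
Definition rect_path_in (S : R2 -> Prop) (x y : R2) (L : R) (gamma : R -> R2) : Prop :=
  continuous_path gamma /\ gamma 0 = x /\ gamma 1 = y /\
  (forall t, 0 <= t <= 1 -> S (gamma t)) /\
  (forall t0 ts, 0 <= t0 -> increasing_from t0 ts -> Forall (fun t => t <= 1) ts ->
     poly_length gamma t0 ts <= L).

Definition whitney_regular (S : R2 -> Prop) : Prop :=
  exists C, 0 < C /\ forall x y, S x -> S y ->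
    exists gamma, rect_path_in S x y (C * dist2 x y) gamma.

Definition has_grad_within (A : R2 -> Prop) (f : R2 -> R) (d : R2) (x : R2) : Prop :=
  forall eps, 0 < eps -> exists delta, 0 < delta /\
    forall y, A y -> y <> x -> dist2 y x < delta ->
      Rabs (f y - f x - inner2 d (sub2 y x)) <= eps * dist2 y x.

Definition cont_within {Y : Type} (dY : Y -> Y -> R)
    (A : R2 -> Prop) (g : R2 -> Y) (x : R2) : Prop :=
  forall eps, 0 < eps -> exists delta, 0 < delta /\
    forall y, A y -> dist2 y x < delta -> dY (g y) (g x) < eps.

Definition Rdist (a b : R) : R := Rabs (a - b).

Definition C1_plane (g : R2 -> R) : Prop :=
  exists dg : R2 -> R2, forall x,
    has_grad_within (fun _ => True) g (dg x) x /\
    cont_within dist2 (fun _ => True) dg x.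

(* C^1_int(K): f in C^1 of the interior2, with f and df extending continuously
   to K (the extensions being identified with f and some df on K). *)
Definition C1_int (K : R2 -> Prop) (f : R2 -> R) : Prop :=
  exists df : R2 -> R2,
    (forall x, interior2 K x -> has_grad_within (fun _ => True) f (df x) x) /\
    (forall x, K x -> cont_within Rdist K f x) /\
    (forall x, K x -> cont_within dist2 K df x).

Definition C1_K (K : R2 -> Prop) (f : R2 -> R) : Prop :=
  exists df : R2 -> R2, forall x, K x ->
    has_grad_within K f (df x) x /\ cont_within dist2 K df x.

Definition C1_restr (K : R2 -> Prop) (f : R2 -> R) : Prop :=
  exists g : R2 -> R, C1_plane g /\ forall x, K x -> g x = f x.

From Stdlib Require Import Reals Lra List Classical.
From Coquelicot Require Import Coquelicot.
Open Scope R_scope.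

(* The set is the "bowtie" [[0,1]^2 ∪ [-1,0]^2], two closed squares meeting only at the origin.
   Its interior is the union of the two open squares, which no path can connect, so it is not
   Whitney regular.  For [f] in [C^1_int], the mean value theorem along segments pushed into an
   open square gives the Whitney estimate inside each closed square, and across the two squares
   one passes through the common corner, whose distance to either point is at most their
   distance.  For [f] in [C^1(K)], Hestenes' reflection, applied in each coordinate, extends
   [f] from the first square to a [C^1] function [g1] on the plane; the same construction
   extends [f - g1] from the second square to [g2], which vanishes to first order at the origin.
   Then [g1 + chi * g2] extends [f], where [chi] is [0] on the first quadrant, [1] on the third
   one and homogeneous of degree [0]: its gradient is [O(1 / |q|)], which the first-order
   vanishing of [g2] absorbs at the origin. *)

(** * The Euclidean plane *)

Lemma dist2_euc p q : dist2 p q = dist_euc (fst p) (snd p) (fst q) (snd q).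
Proof. unfold dist2, dist_euc, Rsqr. f_equal. ring. Qed.

Lemma dist2_ge0 p q : 0 <= dist2 p q.
Proof. apply sqrt_pos. Qed.

Lemma dist2_sym p q : dist2 p q = dist2 q p.
Proof. rewrite !dist2_euc. apply distance_symm. Qed.

Lemma dist2_xx p : dist2 p p = 0.
Proof. rewrite dist2_euc. apply distance_refl. Qed.

Lemma dist2_triangle p q r : dist2 p r <= dist2 p q + dist2 q r.
Proof. rewrite !dist2_euc. apply triangle. Qed.

Lemma Rabs_le_sqrt a b : Rabs a <= sqrt (a ^ 2 + b ^ 2).
Proof.
  rewrite <- sqrt_Rsqr_abs. apply sqrt_le_1_alt. unfold Rsqr. nra.
Qed.

Lemma Rabs_fst_le_dist2 p q : Rabs (fst p - fst q) <= dist2 p q.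
Proof. apply Rabs_le_sqrt. Qed.

Lemma Rabs_snd_le_dist2 p q : Rabs (snd p - snd q) <= dist2 p q.
Proof. unfold dist2. rewrite Rplus_comm. apply Rabs_le_sqrt. Qed.

Lemma dist2_le_l1 p q : dist2 p q <= Rabs (fst p - fst q) + Rabs (snd p - snd q).
Proof.
  unfold dist2. pose proof (Rabs_pos (fst p - fst q)). pose proof (Rabs_pos (snd p - snd q)).
  rewrite <- (sqrt_pow2 (Rabs (fst p - fst q) + Rabs (snd p - snd q))) by lra.
  apply sqrt_le_1_alt.
  rewrite <- (pow2_abs (fst p - fst q)), <- (pow2_abs (snd p - snd q)). nra.
Qed.

Lemma fst_le_dist2 p q : fst p - fst q <= dist2 p q /\ fst q - fst p <= dist2 p q.
Proof.
  pose proof (Rabs_fst_le_dist2 p q) as H. rewrite Rabs_minus_sym in H at 1.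
  split; eapply Rle_trans; try apply Rle_abs; auto. rewrite Rabs_minus_sym; auto.
Qed.

Lemma snd_le_dist2 p q : snd p - snd q <= dist2 p q /\ snd q - snd p <= dist2 p q.
Proof.
  pose proof (Rabs_snd_le_dist2 p q) as H. rewrite Rabs_minus_sym in H at 1.
  split; eapply Rle_trans; try apply Rle_abs; auto. rewrite Rabs_minus_sym; auto.
Qed.

Definition norm1 (d : R2) : R := Rabs (fst d) + Rabs (snd d).

Lemma norm1_ge0 d : 0 <= norm1 d.
Proof. unfold norm1. pose proof (Rabs_pos (fst d)). pose proof (Rabs_pos (snd d)). lra. Qed.

Lemma Rabs_inner2_le d y x : Rabs (inner2 d (sub2 y x)) <= norm1 d * dist2 y x.
Proof.
  unfold inner2, sub2, norm1; simpl.
  pose proof (Rabs_fst_le_dist2 y x). pose proof (Rabs_snd_le_dist2 y x).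
  pose proof (Rabs_pos (fst d)). pose proof (Rabs_pos (snd d)).
  eapply Rle_trans; [apply Rabs_triang|]. rewrite !Rabs_mult. nra.
Qed.

Lemma norm1_sub2_le p q : norm1 (sub2 p q) <= 2 * dist2 p q.
Proof.
  unfold norm1, sub2; simpl.
  pose proof (Rabs_fst_le_dist2 p q). pose proof (Rabs_snd_le_dist2 p q). lra.
Qed.

Lemma small_factor M eps : 0 <= M -> 0 < eps -> exists eta, 0 < eta /\ M * eta <= eps.
Proof.
  intros HM He. exists (eps / (M + 1)). split; [apply Rdiv_lt_0_compat; lra|].
  apply Rle_trans with ((M + 1) * (eps / (M + 1))).
  - apply Rmult_le_compat_r; [left; apply Rdiv_lt_0_compat|]; lra.
  - right. field. lra.
Qed.

Lemma Rmin_pos4 a b c d : 0 < a -> 0 < b -> 0 < c -> 0 < d ->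
  exists t, 0 < t /\ t <= a /\ t <= b /\ t <= c /\ t <= d.
Proof.
  intros. exists (Rmin (Rmin a b) (Rmin c d)). split; [repeat apply Rmin_pos; auto|].
  pose proof (Rmin_l (Rmin a b) (Rmin c d)). pose proof (Rmin_r (Rmin a b) (Rmin c d)).
  pose proof (Rmin_l a b). pose proof (Rmin_r a b). pose proof (Rmin_l c d). pose proof (Rmin_r c d).
  lra.
Qed.

(** * Relative gradients and continuity *)

Section Gradients.

Implicit Types (A B K : R2 -> Prop) (f g : R2 -> R) (d e : R2).

Lemma grad_eq A f d d' x : d = d' -> has_grad_within A f d x -> has_grad_within A f d' x.
Proof. intros ->; auto. Qed.

Lemma grad_ext A f g d x : (forall y, A y -> f y = g y) -> f x = g x ->
  has_grad_within A f d x -> has_grad_within A g d x.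
Proof.
  intros E Ex H eps He. destruct (H eps He) as [del [Hd Hy]]. exists del; split; auto.
  intros y Ay Hyx Hdy. rewrite <- (E y Ay), <- Ex. auto.
Qed.

Lemma grad_subset A B f d x : (forall y, B y -> A y) ->
  has_grad_within A f d x -> has_grad_within B f d x.
Proof. intros S H eps He. destruct (H eps He) as [del [Hd Hy]]. exists del; split; auto. Qed.

Lemma grad_union A B f d x : has_grad_within A f d x -> has_grad_within B f d x ->
  has_grad_within (fun y => A y \/ B y) f d x.
Proof.
  intros H1 H2 eps He.
  destruct (H1 eps He) as [d1 [Hd1 Hy1]]. destruct (H2 eps He) as [d2 [Hd2 Hy2]].
  exists (Rmin d1 d2); split; [apply Rmin_pos; auto|].
  pose proof (Rmin_l d1 d2). pose proof (Rmin_r d1 d2).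
  intros y [Ay|Ay] Hyx Hdy; [apply Hy1| apply Hy2]; auto; lra.
Qed.

Lemma grad_isolated A f d x r : 0 < r -> (forall y, A y -> r <= dist2 y x) ->
  has_grad_within A f d x.
Proof. intros Hr F eps He. exists r; split; auto. intros y Ay _ Hd. specialize (F y Ay). lra. Qed.

Lemma grad_interior A f d x r : 0 < r -> (forall y, dist2 x y < r -> A y) ->
  has_grad_within A f d x -> has_grad_within (fun _ => True) f d x.
Proof.
  intros Hr F H eps He. destruct (H eps He) as [del [Hd Hy]].
  exists (Rmin del r); split; [apply Rmin_pos; auto|].
  pose proof (Rmin_l del r). pose proof (Rmin_r del r).
  intros y _ Hyx Hdy. apply Hy; auto; [apply F; rewrite dist2_sym|]; lra.
Qed.

Lemma grad_remainder_le A f d x : has_grad_within A f d x ->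
  forall eps, 0 < eps -> exists delta, 0 < delta /\ forall y, A y -> dist2 y x < delta ->
    Rabs (f y - f x - inner2 d (sub2 y x)) <= eps * dist2 y x.
Proof.
  intros H eps He. destruct (H eps He) as [del [Hd Hy]]. exists del; split; auto.
  intros y Ay Dy. destruct (classic (y = x)) as [->|N]; auto.
  rewrite dist2_xx. replace (f x - f x - inner2 d (sub2 x x)) with 0
    by (unfold inner2, sub2; simpl; ring).
  rewrite Rabs_R0. lra.
Qed.

Lemma grad_lipschitz A f d x : has_grad_within A f d x ->
  exists delta, 0 < delta /\ forall y, A y -> dist2 y x < delta ->
    Rabs (f y - f x) <= (norm1 d + 1) * dist2 y x.
Proof.
  intros H. destruct (grad_remainder_le _ _ _ _ H 1 ltac:(lra)) as [del [Hd Hy]].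
  exists del; split; auto. intros y Ay Dy. specialize (Hy y Ay Dy).
  pose proof (Rabs_inner2_le d y x).
  replace (f y - f x) with ((f y - f x - inner2 d (sub2 y x)) + inner2 d (sub2 y x)) by ring.
  eapply Rle_trans; [apply Rabs_triang|]. lra.
Qed.

Lemma grad_fst A x : has_grad_within A fst (1, 0) x.
Proof.
  intros eps He. exists 1; split; [lra|]. intros y _ _ _. unfold inner2, sub2; simpl.
  rewrite Rminus_diag_eq by ring. rewrite Rabs_R0. pose proof (dist2_ge0 y x). nra.
Qed.

Lemma grad_snd A x : has_grad_within A snd (0, 1) x.
Proof.
  intros eps He. exists 1; split; [lra|]. intros y _ _ _. unfold inner2, sub2; simpl.
  rewrite Rminus_diag_eq by ring. rewrite Rabs_R0. pose proof (dist2_ge0 y x). nra.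
Qed.

Lemma grad_const A c x : has_grad_within A (fun _ => c) (0, 0) x.
Proof.
  intros eps He. exists 1; split; [lra|]. intros y _ _ _. unfold inner2, sub2; simpl.
  rewrite Rminus_diag_eq by ring. rewrite Rabs_R0. pose proof (dist2_ge0 y x). nra.
Qed.

Lemma grad_plus A f g d e x : has_grad_within A f d x -> has_grad_within A g e x ->
  has_grad_within A (fun y => f y + g y) (fst d + fst e, snd d + snd e) x.
Proof.
  intros H1 H2 eps He.
  destruct (H1 (eps/2) ltac:(lra)) as [d1 [Hd1 Hy1]]. destruct (H2 (eps/2) ltac:(lra)) as [d2 [Hd2 Hy2]].
  exists (Rmin d1 d2); split; [apply Rmin_pos; auto|].
  pose proof (Rmin_l d1 d2). pose proof (Rmin_r d1 d2).
  intros y Ay Hyx Hdy. specialize (Hy1 y Ay Hyx ltac:(lra)). specialize (Hy2 y Ay Hyx ltac:(lra)).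
  set (Ef := f y - f x - inner2 d (sub2 y x)) in Hy1.
  set (Eg := g y - g x - inner2 e (sub2 y x)) in Hy2.
  replace (_ - _ - _) with (Ef + Eg) by (unfold Ef, Eg, inner2, sub2; simpl; ring).
  pose proof (Rabs_triang Ef Eg). lra.
Qed.

Lemma grad_chain A K (P1 P2 : R2 -> R) f J1 J2 d p :
  has_grad_within A P1 J1 p -> has_grad_within A P2 J2 p ->
  (forall y, A y -> K (P1 y, P2 y)) -> has_grad_within K f d (P1 p, P2 p) ->
  has_grad_within A (fun y => f (P1 y, P2 y))
    (fst d * fst J1 + snd d * fst J2, fst d * snd J1 + snd d * snd J2) p.
Proof.
  intros H1 H2 HK Hf eps He.
  destruct (grad_lipschitz _ _ _ _ H1) as [l1 [Hl1 L1]].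
  destruct (grad_lipschitz _ _ _ _ H2) as [l2 [Hl2 L2]].
  pose proof (norm1_ge0 J1). pose proof (norm1_ge0 J2). pose proof (norm1_ge0 d).
  set (M := norm1 J1 + 1 + (norm1 J2 + 1)).
  destruct (small_factor M (eps/2) ltac:(unfold M; lra) ltac:(lra)) as [e1 [He1 Ce1]].
  destruct (grad_remainder_le _ _ _ _ Hf e1 He1) as [df [Hdf Bf]].
  destruct (small_factor M df ltac:(unfold M; lra) Hdf) as [e2 [He2 Ce2]].
  destruct (small_factor (norm1 d) (eps/2) ltac:(auto) ltac:(lra)) as [e3 [He3 Ce3]].
  destruct (grad_remainder_le _ _ _ _ H1 e3 He3) as [d1 [Hd1 Hy1]].
  destruct (grad_remainder_le _ _ _ _ H2 e3 He3) as [d2 [Hd2 Hy2]].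
  exists (Rmin (Rmin l1 l2) (Rmin (e2/2) (Rmin d1 d2))).
  split; [repeat apply Rmin_pos; lra|].
  intros y Ay _ Hdy.
  apply Rmin_Rgt in Hdy as [Hl Hr]. apply Rmin_Rgt in Hl as [Hl1' Hl2'].
  apply Rmin_Rgt in Hr as [He2' Hr]. apply Rmin_Rgt in Hr as [Hd1' Hd2'].
  specialize (L1 y Ay Hl1'). specialize (L2 y Ay Hl2').
  specialize (Hy1 y Ay Hd1'). specialize (Hy2 y Ay Hd2').
  set (D := dist2 y p) in *. assert (HD : 0 <= D) by apply dist2_ge0.
  assert (Hq : dist2 (P1 y, P2 y) (P1 p, P2 p) <= M * D).
  { eapply Rle_trans; [apply dist2_le_l1|]. simpl. unfold M. lra. }
  assert (Bq := Bf (P1 y, P2 y) (HK y Ay) ltac:(unfold M in *; nra)).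
  set (E1 := P1 y - P1 p - inner2 J1 (sub2 y p)) in Hy1.
  set (E2 := P2 y - P2 p - inner2 J2 (sub2 y p)) in Hy2.
  set (Ef := f (P1 y, P2 y) - f (P1 p, P2 p) - inner2 d (sub2 (P1 y, P2 y) (P1 p, P2 p))) in Bq.
  replace (_ - _ - _) with (Ef + (fst d * E1 + snd d * E2))
    by (unfold Ef, E1, E2, inner2, sub2; simpl; ring).
  assert (Rabs (fst d * E1 + snd d * E2) <= norm1 d * (e3 * D)).
  { unfold norm1. eapply Rle_trans; [apply Rabs_triang|]. rewrite !Rabs_mult.
    pose proof (Rabs_pos (fst d)); pose proof (Rabs_pos (snd d)). nra. }
  pose proof (Rabs_triang Ef (fst d * E1 + snd d * E2)). nra.
Qed.

Lemma derivable_pt_lim_le phi u l : derivable_pt_lim phi u l ->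
  forall eps, 0 < eps -> exists delta, 0 < delta /\ forall v, Rabs (v - u) < delta ->
    Rabs (phi v - phi u - l * (v - u)) <= eps * Rabs (v - u).
Proof.
  intros H eps He. destruct (H eps He) as [del Hd]. exists del; split; [apply cond_pos|].
  intros v Hv. destruct (Req_dec (v - u) 0) as [E|N].
  - replace v with u by lra. rewrite Rminus_diag_eq by ring. rewrite Rabs_R0.
    apply Rmult_le_pos; [lra| apply Rabs_pos].
  - specialize (Hd (v - u) N Hv). replace (u + (v - u)) with v in Hd by ring.
    replace (phi v - phi u - l * (v - u)) with (((phi v - phi u) / (v - u) - l) * (v - u))
      by (field; auto).
    rewrite Rabs_mult. apply Rmult_le_compat_r; [apply Rabs_pos| lra].
Qed.

Lemma grad_real_comp_fst phi l u v : derivable_pt_lim phi u l ->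
  has_grad_within (fun _ => True) (fun q => phi (fst q)) (l, 0) (u, v).
Proof.
  intros H eps He. destruct (derivable_pt_lim_le _ _ _ H eps He) as [del [Hd Hv]].
  exists del; split; auto. intros y _ _ Hy.
  pose proof (Rabs_fst_le_dist2 y (u, v)). simpl in *.
  unfold inner2, sub2; simpl. replace (l * (fst y - u) + 0 * (snd y - v)) with (l * (fst y - u)) by ring.
  eapply Rle_trans; [apply Hv; lra|]. apply Rmult_le_compat_l; lra.
Qed.

Lemma grad_fst_mul_snd p : has_grad_within (fun _ => True) (fun q => fst q * snd q) (snd p, fst p) p.
Proof.
  intros eps He. exists eps; split; auto. intros y _ _ Hy.
  pose proof (Rabs_fst_le_dist2 y p). pose proof (Rabs_snd_le_dist2 y p).
  pose proof (Rabs_pos (fst y - fst p)). pose proof (Rabs_pos (snd y - snd p)).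
  unfold inner2, sub2; simpl.
  replace (_ - _ - _) with ((fst y - fst p) * (snd y - snd p)) by ring.
  rewrite Rabs_mult. nra.
Qed.

Lemma grad_comp_real A f d x phi l : derivable_pt_lim phi (f x) l -> has_grad_within A f d x ->
  has_grad_within A (fun y => phi (f y)) (l * fst d, l * snd d) x.
Proof.
  intros Hphi H. eapply grad_eq;
    [| apply (grad_chain A (fun _ => True) f (fun _ => 0) (fun q => phi (fst q)) d (0, 0));
       [exact H| apply grad_const| auto| apply grad_real_comp_fst; exact Hphi]].
  simpl. f_equal; ring.
Qed.

Lemma grad_scale A f d x c : has_grad_within A f d x ->
  has_grad_within A (fun y => c * f y) (c * fst d, c * snd d) x.
Proof.
  apply (grad_comp_real A f d x (fun t => c * t)).
  apply is_derive_Reals. auto_derive; [auto| ring].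
Qed.

Lemma grad_mult A f g d e x : has_grad_within A f d x -> has_grad_within A g e x ->
  has_grad_within A (fun y => f y * g y)
    (g x * fst d + f x * fst e, g x * snd d + f x * snd e) x.
Proof.
  intros H1 H2.
  apply (grad_chain A (fun _ => True) f g (fun q => fst q * snd q) d e (g x, f x) x H1 H2);
    [auto| apply grad_fst_mul_snd].
Qed.

End Gradients.

Section Continuity.

Implicit Types (A B K : R2 -> Prop) (f g : R2 -> R).

Lemma cont_ext {Y} (dY : Y -> Y -> R) A (u v : R2 -> Y) x :
  (forall y, A y -> u y = v y) -> u x = v x -> cont_within dY A u x -> cont_within dY A v x.
Proof.
  intros E Ex H eps He. destruct (H eps He) as [del [Hd Hy]]. exists del; split; auto.
  intros y Ay Hdy. rewrite <- (E y Ay), <- Ex. auto.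
Qed.

Lemma cont_subset {Y} (dY : Y -> Y -> R) A B (u : R2 -> Y) x :
  (forall y, B y -> A y) -> cont_within dY A u x -> cont_within dY B u x.
Proof. intros S H eps He. destruct (H eps He) as [del [Hd Hy]]. exists del; split; auto. Qed.

Lemma cont_union {Y} (dY : Y -> Y -> R) A B (u : R2 -> Y) x :
  cont_within dY A u x -> cont_within dY B u x -> cont_within dY (fun y => A y \/ B y) u x.
Proof.
  intros H1 H2 eps He.
  destruct (H1 eps He) as [d1 [Hd1 Hy1]]. destruct (H2 eps He) as [d2 [Hd2 Hy2]].
  exists (Rmin d1 d2); split; [apply Rmin_pos; auto|].
  pose proof (Rmin_l d1 d2). pose proof (Rmin_r d1 d2).
  intros y [Ay|Ay] Hdy; [apply Hy1| apply Hy2]; auto; lra.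
Qed.

Lemma cont_isolated {Y} (dY : Y -> Y -> R) A (u : R2 -> Y) x r :
  0 < r -> (forall y, A y -> r <= dist2 y x) -> cont_within dY A u x.
Proof. intros Hr F eps He. exists r; split; auto. intros y Ay Hd. specialize (F y Ay). lra. Qed.

Lemma cont_comp {Y} (dY : Y -> Y -> R) A K (u : R2 -> Y) (Phi : R2 -> R2) p :
  cont_within dY K u (Phi p) -> (forall y, A y -> K (Phi y)) -> cont_within dist2 A Phi p ->
  cont_within dY A (fun y => u (Phi y)) p.
Proof.
  intros Hu HK HP eps He. destruct (Hu eps He) as [d [Hd Hy]].
  destruct (HP d Hd) as [d1 [Hd1 Hy1]]. exists d1; split; auto.
Qed.

Lemma grad_cont A f d x : has_grad_within A f d x -> cont_within Rdist A f x.
Proof.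
  intros H eps He. destruct (grad_lipschitz _ _ _ _ H) as [l [Hl L]].
  pose proof (norm1_ge0 d).
  destruct (small_factor (norm1 d + 1) (eps/2) ltac:(lra) ltac:(lra)) as [e [He' Ce]].
  exists (Rmin l e); split; [apply Rmin_pos; auto|].
  intros y Ay Hdy. apply Rmin_Rgt in Hdy as [Hdl Hde].
  specialize (L y Ay Hdl). unfold Rdist.
  assert ((norm1 d + 1) * dist2 y x <= (norm1 d + 1) * e)
    by (apply Rmult_le_compat_l; lra).
  lra.
Qed.

Lemma cont_const A c x : cont_within Rdist A (fun _ => c) x.
Proof. apply (grad_cont _ _ _ _ (grad_const A c x)). Qed.

Lemma cont_fst A x : cont_within Rdist A fst x.
Proof. apply (grad_cont _ _ _ _ (grad_fst A x)). Qed.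

Lemma cont_snd A x : cont_within Rdist A snd x.
Proof. apply (grad_cont _ _ _ _ (grad_snd A x)). Qed.

Lemma cont_pair A f g x : cont_within Rdist A f x -> cont_within Rdist A g x ->
  cont_within dist2 A (fun y => (f y, g y)) x.
Proof.
  intros H1 H2 eps He.
  destruct (H1 (eps/2) ltac:(lra)) as [d1 [Hd1 Hy1]]. destruct (H2 (eps/2) ltac:(lra)) as [d2 [Hd2 Hy2]].
  exists (Rmin d1 d2); split; [apply Rmin_pos; auto|].
  intros y Ay Hdy. apply Rmin_Rgt in Hdy as [Hdy1 Hdy2].
  specialize (Hy1 y Ay Hdy1). specialize (Hy2 y Ay Hdy2). unfold Rdist in *.
  eapply Rle_lt_trans; [apply dist2_le_l1|]. simpl. lra.
Qed.

Lemma cont_fst_comp A (u : R2 -> R2) x : cont_within dist2 A u x ->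
  cont_within Rdist A (fun y => fst (u y)) x.
Proof.
  intros H eps He. destruct (H eps He) as [d [Hd Hy]]. exists d; split; auto.
  intros y Ay Hdy. eapply Rle_lt_trans; [apply Rabs_fst_le_dist2| auto].
Qed.

Lemma cont_snd_comp A (u : R2 -> R2) x : cont_within dist2 A u x ->
  cont_within Rdist A (fun y => snd (u y)) x.
Proof.
  intros H eps He. destruct (H eps He) as [d [Hd Hy]]. exists d; split; auto.
  intros y Ay Hdy. eapply Rle_lt_trans; [apply Rabs_snd_le_dist2| auto].
Qed.

Lemma cont_plus A f g x : cont_within Rdist A f x -> cont_within Rdist A g x ->
  cont_within Rdist A (fun y => f y + g y) x.
Proof.
  intros H1 H2.
  apply (cont_comp Rdist A (fun _ => True) (fun q => fst q + snd q) (fun y => (f y, g y)));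
    [| auto| apply cont_pair; auto].
  apply (grad_cont _ _ _ _ (grad_plus _ _ _ _ _ _ (grad_fst _ _) (grad_snd _ _))).
Qed.

Lemma cont_mult A f g x : cont_within Rdist A f x -> cont_within Rdist A g x ->
  cont_within Rdist A (fun y => f y * g y) x.
Proof.
  intros H1 H2.
  apply (cont_comp Rdist A (fun _ => True) (fun q => fst q * snd q) (fun y => (f y, g y)));
    [| auto| apply cont_pair; auto].
  apply (grad_cont _ _ _ _ (grad_fst_mul_snd _)).
Qed.

Lemma cont_scale A f x c : cont_within Rdist A f x -> cont_within Rdist A (fun y => c * f y) x.
Proof. apply cont_mult, cont_const. Qed.

Lemma cont_comp_real A f x phi : continuity_pt phi (f x) -> cont_within Rdist A f x ->
  cont_within Rdist A (fun y => phi (f y)) x.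
Proof.
  intros Hphi H eps He. destruct (Hphi eps He) as [d [Hd Hv]].
  destruct (H d Hd) as [d1 [Hd1 Hy]]. exists d1; split; auto.
  intros y Ay Hdy. specialize (Hy y Ay Hdy). unfold Rdist in *.
  destruct (Req_dec (f x) (f y)) as [E|N].
  - rewrite E, Rminus_diag_eq, Rabs_R0; auto.
  - apply (Hv (f y)). split; [split; [exact I| exact N]|]. exact Hy.
Qed.

Lemma cont_opp A f x : cont_within Rdist A f x -> cont_within Rdist A (fun y => - f y) x.
Proof. apply (cont_comp_real _ _ _ Ropp). reg. Qed.

Lemma cont_inv A f x : f x <> 0 -> cont_within Rdist A f x ->
  cont_within Rdist A (fun y => / f y) x.
Proof. intros N. apply (cont_comp_real _ _ _ Rinv). reg; auto. Qed.

End Continuity.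

Definition C1_at (A : R2 -> Prop) (f : R2 -> R) (df : R2 -> R2) (p : R2) : Prop :=
  has_grad_within A f (df p) p /\ cont_within dist2 A df p.

Definition add2 (u v : R2) : R2 := (fst u + fst v, snd u + snd v).

Definition scale2 (c : R) (u : R2) : R2 := (c * fst u, c * snd u).

Section C1_at.

Implicit Types (A B : R2 -> Prop) (f g : R2 -> R) (df dg : R2 -> R2).

Lemma C1_at_ext A f g df dg p : (forall y, A y -> g y = f y /\ dg y = df y) ->
  g p = f p /\ dg p = df p -> C1_at A f df p -> C1_at A g dg p.
Proof.
  intros E [Ep Edp] [H C]. unfold C1_at. rewrite Edp. split.
  - apply (grad_ext _ f); auto. intros y Ay. symmetry. apply E; auto.
  - apply (cont_ext _ _ df); auto. intros y Ay. symmetry. apply E; auto.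
Qed.

Lemma C1_at_subset A B f df p : (forall y, B y -> A y) -> C1_at A f df p -> C1_at B f df p.
Proof. intros S [H C]. split; [apply (grad_subset A)| apply (cont_subset _ A)]; auto. Qed.

Lemma C1_at_union A B f df p : C1_at A f df p -> C1_at B f df p ->
  C1_at (fun y => A y \/ B y) f df p.
Proof. intros [H1 C1] [H2 C2]. split; [apply grad_union| apply cont_union]; auto. Qed.

Lemma C1_at_isolated A f df p r : 0 < r -> (forall y, A y -> r <= dist2 y p) -> C1_at A f df p.
Proof. intros Hr F. split; [apply (grad_isolated _ _ _ _ r)| apply (cont_isolated _ _ _ _ r)]; auto. Qed.

Lemma C1_at_plus A f g df dg p : C1_at A f df p -> C1_at A g dg p ->
  C1_at A (fun y => f y + g y) (fun y => add2 (df y) (dg y)) p.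
Proof.
  intros [H1 C1] [H2 C2]. split; [apply grad_plus; auto|].
  apply cont_pair; apply cont_plus;
    auto using cont_fst_comp, cont_snd_comp.
Qed.

Lemma C1_at_scale A f df p c : C1_at A f df p ->
  C1_at A (fun y => c * f y) (fun y => scale2 c (df y)) p.
Proof.
  intros [H C]. split; [apply grad_scale; auto|].
  apply cont_pair; apply cont_scale; auto using cont_fst_comp, cont_snd_comp.
Qed.

Lemma C1_at_mult A f g df dg p : C1_at A f df p -> C1_at A g dg p ->
  C1_at A (fun y => f y * g y) (fun y => add2 (scale2 (g y) (df y)) (scale2 (f y) (dg y))) p.
Proof.
  intros [H1 C1] [H2 C2]. split; [apply grad_mult; auto|].
  assert (Cf := grad_cont _ _ _ _ H1). assert (Cg := grad_cont _ _ _ _ H2).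
  apply cont_pair; apply cont_plus; apply cont_mult; auto using cont_fst_comp, cont_snd_comp.
Qed.

End C1_at.

Definition pullback2 (J1 J2 v : R2) : R2 :=
  (fst v * fst J1 + snd v * fst J2, fst v * snd J1 + snd v * snd J2).

Lemma C1_at_comp_linear A u du (P1 P2 : R2 -> R) J1 J2 p :
  (forall q, has_grad_within (fun _ => True) P1 J1 q) ->
  (forall q, has_grad_within (fun _ => True) P2 J2 q) ->
  C1_at A u du (P1 p, P2 p) ->
  C1_at (fun q => A (P1 q, P2 q)) (fun q => u (P1 q, P2 q))
    (fun q => pullback2 J1 J2 (du (P1 q, P2 q))) p.
Proof.
  intros H1 H2 [Hu Cu].
  assert (G1 := grad_subset _ (fun q => A (P1 q, P2 q)) _ _ _ (fun _ _ => I) (H1 p)).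
  assert (G2 := grad_subset _ (fun q => A (P1 q, P2 q)) _ _ _ (fun _ _ => I) (H2 p)).
  assert (CC : cont_within dist2 (fun q => A (P1 q, P2 q)) (fun q => du (P1 q, P2 q)) p).
  { apply (cont_comp _ _ A du (fun q => (P1 q, P2 q))); auto.
    apply cont_pair; eapply grad_cont; eauto. }
  split.
  - apply (grad_chain _ A P1 P2 u J1 J2 _ p G1 G2); auto.
  - unfold pullback2. apply cont_pair; apply cont_plus;
      apply (cont_mult _ _ (fun _ => _)); auto using cont_const, cont_fst_comp, cont_snd_comp.
Qed.

Definition swap2 (q : R2) : R2 := (snd q, fst q).

Definition neg2 (q : R2) : R2 := (- fst q, - snd q).

Lemma neg2_involutive q : neg2 (neg2 q) = q.
Proof. unfold neg2; simpl. rewrite !Ropp_involutive. destruct q; reflexivity. Qed.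

Lemma swap2_involutive q : swap2 (swap2 q) = q.
Proof. destruct q; reflexivity. Qed.

Lemma C1_at_swap A u du p : C1_at A u du (swap2 p) ->
  C1_at (fun q => A (swap2 q)) (fun q => u (swap2 q)) (fun q => swap2 (du (swap2 q))) p.
Proof.
  intros H. eapply C1_at_ext;
    [| | apply (C1_at_comp_linear A u du snd fst (0, 1) (1, 0) p (grad_snd _) (grad_fst _) H)].
  - intros y _. unfold pullback2, swap2. simpl. split; [reflexivity| f_equal; ring].
  - unfold pullback2, swap2. simpl. split; [reflexivity| f_equal; ring].
Qed.

Lemma grad_neg_fst q : has_grad_within (fun _ => True) (fun y => - fst y) (-1, 0) q.
Proof.
  eapply grad_eq; [| apply (grad_comp_real _ fst (1, 0) q Ropp (-1)); [| apply grad_fst]].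
  - simpl. f_equal; ring.
  - apply is_derive_Reals. auto_derive; [auto| ring].
Qed.

Lemma grad_neg_snd q : has_grad_within (fun _ => True) (fun y => - snd y) (0, -1) q.
Proof.
  eapply grad_eq; [| apply (grad_comp_real _ snd (0, 1) q Ropp (-1)); [| apply grad_snd]].
  - simpl. f_equal; ring.
  - apply is_derive_Reals. auto_derive; [auto| ring].
Qed.

Lemma C1_at_neg A u du p : C1_at A u du (neg2 p) ->
  C1_at (fun q => A (neg2 q)) (fun q => u (neg2 q)) (fun q => neg2 (du (neg2 q))) p.
Proof.
  intros H. eapply C1_at_ext;
    [| | apply (C1_at_comp_linear A u du _ _ (-1, 0) (0, -1) p grad_neg_fst grad_neg_snd H)].
  - intros y _. unfold pullback2, neg2. simpl. split; [reflexivity| f_equal; ring].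
  - unfold pullback2, neg2. simpl. split; [reflexivity| f_equal; ring].
Qed.

(** * Hestenes reflection across the sides of a strip *)

Definition slab (I B : R -> Prop) (q : R2) : Prop := I (fst q) /\ B (snd q).

Definition unit_interval (x : R) : Prop := 0 <= x <= 1.

Definition comp_x (t : R -> R) (h : R2 -> R) (q : R2) : R := h (t (fst q), snd q).

Definition comp_x_grad (t t' : R -> R) (dh : R2 -> R2) (q : R2) : R2 :=
  (t' (fst q) * fst (dh (t (fst q), snd q)), snd (dh (t (fst q), snd q))).

(* Hestenes' reflection: [-3 + 4 = 1] and [-3 * (-1) + 4 * (-1/2) = 1], so value and
   first derivative match across a point where [t1, t2] fix [x] with slopes [-1, -1/2]. *)
Definition hestenes (t1 t2 : R -> R) (h : R2 -> R) (q : R2) : R :=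
  -3 * comp_x t1 h q + 4 * comp_x t2 h q.

Definition hestenes_grad (t1 t1' t2 t2' : R -> R) (dh : R2 -> R2) (q : R2) : R2 :=
  add2 (scale2 (-3) (comp_x_grad t1 t1' dh q)) (scale2 4 (comp_x_grad t2 t2' dh q)).

Lemma hestenes_fixed t1 t1' t2 t2' h dh q :
  t1 (fst q) = fst q -> t2 (fst q) = fst q -> t1' (fst q) = -1 -> t2' (fst q) = -1/2 ->
  hestenes t1 t2 h q = h q /\ hestenes_grad t1 t1' t2 t2' dh q = dh q.
Proof.
  intros E1 E2 E1' E2'. destruct q as [x y]. simpl in *.
  unfold hestenes, hestenes_grad, comp_x, comp_x_grad, add2, scale2; simpl.
  rewrite E1, E2, E1', E2'. destruct (dh (x, y)) as [u v]; simpl.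
  split; [ring| f_equal; field].
Qed.

(* [refl k] maps [(-oo, 0]] into [[0, 1)] and fixes [0] with slope [-1/k]; [mirror] moves
   the picture to [[1, +oo)]. *)
Definition refl (k x : R) : R := x / (k * (x - 1)).

Definition refl' (k x : R) : R := -1 / (k * ((x - 1) * (x - 1))).

Definition mirror (t : R -> R) (x : R) : R := 1 - t (1 - x).

Definition mirror' (t' : R -> R) (x : R) : R := t' (1 - x).

Lemma refl_deriv k x : 0 < k -> x < 1 -> derivable_pt_lim (refl k) x (refl' k x).
Proof.
  intros Hk Hx. assert (0 < k * (1 - x)) by (apply Rmult_lt_0_compat; lra).
  apply is_derive_Reals. unfold refl, refl'.
  auto_derive; [intro; nra| field; split; [intro|]; nra].
Qed.

Lemma refl'_cont k x : 0 < k -> x < 1 -> continuity_pt (refl' k) x.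
Proof.
  intros Hk Hx. assert (0 < k * (1 - x)) by (apply Rmult_lt_0_compat; lra).
  unfold refl'. reg. intro; nra.
Qed.

Lemma mirror_refl_deriv k x : 0 < k -> 0 < x ->
  derivable_pt_lim (mirror (refl k)) x (mirror' (refl' k) x).
Proof.
  intros Hk Hx. assert (0 < k * x) by (apply Rmult_lt_0_compat; lra).
  apply is_derive_Reals. unfold mirror, mirror', refl, refl'.
  auto_derive; [intro; nra| field; split; [intro|]; nra].
Qed.

Lemma mirror_refl'_cont k x : 0 < k -> 0 < x -> continuity_pt (mirror' (refl' k)) x.
Proof.
  intros Hk Hx. assert (0 < k * x) by (apply Rmult_lt_0_compat; lra).
  unfold mirror', refl'. reg. intro; nra.
Qed.

Lemma refl_range k x : 1 <= k -> x <= 0 -> unit_interval (refl k x).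
Proof.
  intros Hk Hx. unfold unit_interval, refl.
  assert (Hc : k * (x - 1) < 0) by nra.
  assert (E : x / (k * (x - 1)) * (k * (x - 1)) = x) by (field; lra).
  set (s := x / (k * (x - 1))) in *. set (c := k * (x - 1)) in *.
  assert (c <= x) by (unfold c; nra). split; nra.
Qed.

Lemma mirror_refl_range k x : 1 <= k -> 1 <= x -> unit_interval (mirror (refl k) x).
Proof.
  intros Hk Hx. pose proof (refl_range k (1 - x) Hk ltac:(lra)).
  unfold unit_interval, mirror in *. lra.
Qed.

Definition reflect_x (h : R2 -> R) (q : R2) : R :=
  if Rlt_dec (fst q) 0 then hestenes (refl 1) (refl 2) h q
  else if Rle_dec (fst q) 1 then h q
  else hestenes (mirror (refl 1)) (mirror (refl 2)) h q.

Definition reflect_x_grad (dh : R2 -> R2) (q : R2) : R2 :=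
  if Rlt_dec (fst q) 0 then hestenes_grad (refl 1) (refl' 1) (refl 2) (refl' 2) dh q
  else if Rle_dec (fst q) 1 then dh q
  else hestenes_grad (mirror (refl 1)) (mirror' (refl' 1))
         (mirror (refl 2)) (mirror' (refl' 2)) dh q.

Lemma hestenes_refl_0 h dh q : fst q = 0 ->
  hestenes (refl 1) (refl 2) h q = h q /\
  hestenes_grad (refl 1) (refl' 1) (refl 2) (refl' 2) dh q = dh q.
Proof. intros E. apply hestenes_fixed; rewrite E; unfold refl, refl'; field. Qed.

Lemma hestenes_mirror_refl_1 h dh q : fst q = 1 ->
  hestenes (mirror (refl 1)) (mirror (refl 2)) h q = h q /\
  hestenes_grad (mirror (refl 1)) (mirror' (refl' 1)) (mirror (refl 2)) (mirror' (refl' 2)) dh q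
    = dh q.
Proof.
  intros E. apply hestenes_fixed; rewrite E; unfold mirror, mirror', refl, refl';
    replace (1 - 1) with 0 by ring; field.
Qed.

Lemma reflect_x_left h dh q : fst q <= 0 ->
  reflect_x h q = hestenes (refl 1) (refl 2) h q /\
  reflect_x_grad dh q = hestenes_grad (refl 1) (refl' 1) (refl 2) (refl' 2) dh q.
Proof.
  intros H. unfold reflect_x, reflect_x_grad. destruct (Rlt_dec (fst q) 0); [auto|].
  destruct (Rle_dec (fst q) 1); [|lra].
  destruct (hestenes_refl_0 h dh q ltac:(lra)) as [-> ->]. auto.
Qed.

Lemma reflect_x_mid h dh q : unit_interval (fst q) ->
  reflect_x h q = h q /\ reflect_x_grad dh q = dh q.
Proof.
  intros [H1 H2]. unfold reflect_x, reflect_x_grad.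
  destruct (Rlt_dec (fst q) 0); [apply hestenes_refl_0; lra|].
  destruct (Rle_dec (fst q) 1); [auto| lra].
Qed.

Lemma reflect_x_right h dh q : 1 <= fst q ->
  reflect_x h q = hestenes (mirror (refl 1)) (mirror (refl 2)) h q /\
  reflect_x_grad dh q = hestenes_grad (mirror (refl 1)) (mirror' (refl' 1))
                          (mirror (refl 2)) (mirror' (refl' 2)) dh q.
Proof.
  intros H. unfold reflect_x, reflect_x_grad. destruct (Rlt_dec (fst q) 0); [lra|].
  destruct (Rle_dec (fst q) 1); [|auto].
  destruct (hestenes_mirror_refl_1 h dh q ltac:(lra)) as [-> ->]. auto.
Qed.

Section Reflection.

Variables (B : R -> Prop) (h : R2 -> R) (dh : R2 -> R2).
Hypothesis h_C1 : forall q, slab unit_interval B q -> C1_at (slab unit_interval B) h dh q.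

Lemma C1_at_comp_x I t t' p :
  derivable_pt_lim t (fst p) (t' (fst p)) -> continuity_pt t' (fst p) ->
  (forall x, I x -> unit_interval (t x)) -> slab I B p ->
  C1_at (slab I B) (comp_x t h) (comp_x_grad t t' dh) p.
Proof.
  intros Hd Hc Ht [HI HB].
  set (T := fun q : R2 => (t (fst q), snd q)).
  assert (HT : forall y, slab I B y -> slab unit_interval B (T y))
    by (intros y [Iy By]; split; simpl; auto).
  destruct (h_C1 (T p) (HT p (conj HI HB))) as [H1 H2].
  assert (HP : has_grad_within (slab I B) (fun q => t (fst q)) (t' (fst p) * 1, t' (fst p) * 0) p)
    by (apply (grad_comp_real _ fst (1, 0) p t); auto; apply grad_fst).
  assert (CT : cont_within dist2 (slab I B) (fun q => dh (T q)) p).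
  { apply (cont_comp _ _ (slab unit_interval B) dh T); auto.
    apply cont_pair; [apply (grad_cont _ _ _ _ HP)| apply cont_snd]. }
  split.
  - eapply grad_eq; [| apply (grad_chain _ _ _ snd h _ (0, 1) _ p HP (grad_snd _ p) HT H1)].
    unfold comp_x_grad, T. simpl. f_equal; ring.
  - unfold comp_x_grad. apply cont_pair.
    + apply cont_mult; [apply (cont_comp_real _ fst); auto using cont_fst|].
      apply (cont_fst_comp _ _ _ CT).
    + apply (cont_snd_comp _ _ _ CT).
Qed.

Lemma C1_at_hestenes I t1 t1' t2 t2' p :
  derivable_pt_lim t1 (fst p) (t1' (fst p)) -> continuity_pt t1' (fst p) ->
  derivable_pt_lim t2 (fst p) (t2' (fst p)) -> continuity_pt t2' (fst p) ->
  (forall x, I x -> unit_interval (t1 x)) -> (forall x, I x -> unit_interval (t2 x)) ->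
  slab I B p ->
  C1_at (slab I B) (hestenes t1 t2 h) (hestenes_grad t1 t1' t2 t2' dh) p.
Proof.
  intros. apply C1_at_plus; apply C1_at_scale; apply C1_at_comp_x; auto.
Qed.

Lemma reflect_x_C1_left p : B (snd p) ->
  C1_at (slab (fun x => x <= 0) B) (reflect_x h) (reflect_x_grad dh) p.
Proof.
  intros Hp. destruct (Rle_dec (fst p) 0) as [a|a].
  - apply (C1_at_ext _ (hestenes (refl 1) (refl 2) h) _
             (hestenes_grad (refl 1) (refl' 1) (refl 2) (refl' 2) dh)).
    + intros y [Hy _]. apply reflect_x_left; auto.
    + apply reflect_x_left; auto.
    + apply C1_at_hestenes;
        [apply refl_deriv| apply refl'_cont| apply refl_deriv| apply refl'_cont|
         intros; apply refl_range..| split]; auto; lra.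
  - apply (C1_at_isolated _ _ _ _ (fst p)); [lra|].
    intros y [Hy _]. pose proof (fst_le_dist2 y p). lra.
Qed.

Lemma reflect_x_C1_mid p : B (snd p) ->
  C1_at (slab unit_interval B) (reflect_x h) (reflect_x_grad dh) p.
Proof.
  intros Hp. destruct (Rle_dec 0 (fst p)) as [a|a]; [destruct (Rle_dec (fst p) 1) as [b|b]|].
  - apply (C1_at_ext _ h _ dh).
    + intros y [Hy _]. apply reflect_x_mid; auto.
    + apply reflect_x_mid. split; auto.
    + apply h_C1. repeat split; auto.
  - apply (C1_at_isolated _ _ _ _ (fst p - 1)); [lra|].
    intros y [Hy _]. pose proof (fst_le_dist2 y p). unfold unit_interval in Hy. lra.
  - apply (C1_at_isolated _ _ _ _ (- fst p)); [lra|].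
    intros y [Hy _]. pose proof (fst_le_dist2 y p). unfold unit_interval in Hy. lra.
Qed.

Lemma reflect_x_C1_right p : B (snd p) ->
  C1_at (slab (fun x => 1 <= x) B) (reflect_x h) (reflect_x_grad dh) p.
Proof.
  intros Hp. destruct (Rle_dec 1 (fst p)) as [a|a].
  - apply (C1_at_ext _ (hestenes (mirror (refl 1)) (mirror (refl 2)) h) _
             (hestenes_grad (mirror (refl 1)) (mirror' (refl' 1))
                (mirror (refl 2)) (mirror' (refl' 2)) dh)).
    + intros y [Hy _]. apply reflect_x_right; auto.
    + apply reflect_x_right; auto.
    + apply C1_at_hestenes;
        [apply mirror_refl_deriv| apply mirror_refl'_cont| apply mirror_refl_deriv|
         apply mirror_refl'_cont| intros; apply mirror_refl_range..| split]; auto; lra.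
  - apply (C1_at_isolated _ _ _ _ (1 - fst p)); [lra|].
    intros y [Hy _]. pose proof (fst_le_dist2 y p). lra.
Qed.

Lemma reflect_x_C1 p : B (snd p) ->
  C1_at (fun q => B (snd q)) (reflect_x h) (reflect_x_grad dh) p.
Proof.
  intros Hp.
  apply (C1_at_subset (fun q => slab (fun x => x <= 0) B q \/
                        (slab unit_interval B q \/ slab (fun x => 1 <= x) B q))).
  - intros q Hq. unfold slab, unit_interval.
    destruct (Rle_dec (fst q) 0); [|destruct (Rle_dec (fst q) 1)];
      [left| right; left| right; right]; split; auto; lra.
  - apply C1_at_union; [|apply C1_at_union];
      auto using reflect_x_C1_left, reflect_x_C1_mid, reflect_x_C1_right.
Qed.

End Reflection.

(** * Extension from a square *)

Definition square (c : R) (q : R2) : Prop := c <= fst q <= c + 1 /\ c <= snd q <= c + 1.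

Definition C1_extension (A : R2 -> Prop) (f : R2 -> R) (df : R2 -> R2)
    (g : R2 -> R) (dg : R2 -> R2) : Prop :=
  (forall x, C1_at (fun _ => True) g dg x) /\ (forall p, A p -> g p = f p /\ dg p = df p).

Definition ext_square (f : R2 -> R) (q : R2) : R :=
  reflect_x (fun r => reflect_x f (swap2 r)) (swap2 q).

Definition ext_square_grad (df : R2 -> R2) (q : R2) : R2 :=
  swap2 (reflect_x_grad (fun r => swap2 (reflect_x_grad df (swap2 r))) (swap2 q)).

Lemma square0_slab q : square 0 q <-> slab unit_interval unit_interval q.
Proof. unfold square, slab, unit_interval. split; intros; lra. Qed.

Lemma ext_square_C1 f df : (forall p, square 0 p -> C1_at (square 0) f df p) ->
  C1_extension (square 0) f df (ext_square f) (ext_square_grad df).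
Proof.
  intros Hf.
  assert (S1 : forall p, unit_interval (snd p) ->
            C1_at (fun q => unit_interval (snd q)) (reflect_x f) (reflect_x_grad df) p).
  { apply reflect_x_C1. intros q Hq. apply (C1_at_subset (square 0)).
    - intros y Hy. apply square0_slab; auto.
    - apply Hf, square0_slab; auto. }
  assert (S2 : forall q, slab unit_interval (fun _ => True) q ->
            C1_at (slab unit_interval (fun _ => True)) (fun r => reflect_x f (swap2 r))
              (fun r => swap2 (reflect_x_grad df (swap2 r))) q).
  { intros q [Hq _]. apply (C1_at_subset (fun r => unit_interval (snd (swap2 r)))).
    - intros y [Hy _]. exact Hy.
    - apply (C1_at_swap (fun r => unit_interval (snd r)) (reflect_x f)), S1. exact Hq. }
  split.
  - intros p. apply (C1_at_swap (fun _ => True)).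
    apply (reflect_x_C1 (fun _ => True) _ _ S2). exact I.
  - intros p Hp. apply square0_slab in Hp as [Hx Hy]. unfold ext_square, ext_square_grad.
    destruct (reflect_x_mid (fun r => reflect_x f (swap2 r))
                (fun r => swap2 (reflect_x_grad df (swap2 r))) (swap2 p) Hy) as [-> ->].
    rewrite swap2_involutive. destruct (reflect_x_mid f df p Hx) as [-> ->].
    rewrite swap2_involutive. auto.
Qed.

Lemma square_neg2 q : square (-1) q -> square 0 (neg2 q).
Proof. unfold square, neg2; simpl. intros. lra. Qed.

Lemma square0_neg2 q : square 0 q -> square (-1) (neg2 q).
Proof. unfold square, neg2; simpl. intros. lra. Qed.

Lemma square_neg_extension f df : (forall p, square (-1) p -> C1_at (square (-1)) f df p) ->
  exists g dg, C1_extension (square (-1)) f df g dg.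
Proof.
  intros Hf.
  set (h := fun q => f (neg2 q)). set (dh := fun q => neg2 (df (neg2 q))).
  destruct (ext_square_C1 h dh) as [G E].
  { intros p Hp. apply (C1_at_subset (fun q => square (-1) (neg2 q))).
    - apply square0_neg2.
    - apply (C1_at_neg (square (-1)) f df), Hf, square0_neg2, Hp. }
  exists (fun q => ext_square h (neg2 q)), (fun q => neg2 (ext_square_grad dh (neg2 q))). split.
  - intros x. apply (C1_at_neg (fun _ => True)), G.
  - intros p Hp. destruct (E (neg2 p) (square_neg2 p Hp)) as [-> ->].
    unfold h, dh. rewrite !neg2_involutive. auto.
Qed.

(** * A cutoff homogeneous of degree zero *)

Definition negsq (t : R) : R := if Rlt_dec t 0 then t * t else 0.

Definition negsq' (t : R) : R := if Rlt_dec t 0 then 2 * t else 0.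

Lemma negsq_deriv t : derivable_pt_lim negsq t (negsq' t).
Proof.
  intros eps He. exists (mkposreal eps He). intros h Hh Hhd. simpl in Hhd.
  assert (0 < Rabs h) by (apply Rabs_pos_lt; auto).
  assert (Hhh : Rabs h * Rabs h = h * h) by (rewrite <- Rabs_mult; apply Rabs_right; nra).
  assert (R : Rabs (negsq (t + h) - negsq t - negsq' t * h) <= Rabs h * Rabs h).
  { rewrite Hhh. unfold negsq, negsq'.
    destruct (Rlt_dec (t + h) 0); destruct (Rlt_dec t 0);
      [replace (_ - _ - _) with (h * h) by ring| replace (_ - _ - _) with ((t + h) * (t + h)) by ring|
       replace (_ - _ - _) with (- (t * (t + 2 * h))) by ring| replace (_ - _ - _) with 0 by ring];
      rewrite ?Rabs_Ropp; apply Rabs_le; split; nra. }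
  replace ((negsq (t + h) - negsq t) / h - negsq' t)
    with ((negsq (t + h) - negsq t - negsq' t * h) / h) by (field; auto).
  unfold Rdiv. rewrite Rabs_mult, Rabs_inv.
  apply Rle_lt_trans with (Rabs h * Rabs h * / Rabs h).
  - apply Rmult_le_compat_r; [left; apply Rinv_0_lt_compat|]; auto.
  - replace (Rabs h * Rabs h * / Rabs h) with (Rabs h) by (field; lra). auto.
Qed.

Lemma negsq'_cont t : continuity_pt negsq' t.
Proof.
  apply (continuity_pt_ext (fun u => u - Rabs u)); [| reg].
  intros u. unfold negsq'. destruct (Rlt_dec u 0).
  - rewrite Rabs_left by auto. ring.
  - rewrite Rabs_right by lra. ring.
Qed.

Lemma negsq_bounds t : 0 <= negsq t <= t * t.
Proof. unfold negsq. destruct (Rlt_dec t 0); nra. Qed.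

Lemma Rabs_negsq'_le t : Rabs (negsq' t) <= 2 * Rabs t.
Proof.
  unfold negsq'. destruct (Rlt_dec t 0).
  - rewrite Rabs_mult, (Rabs_right 2); lra.
  - rewrite Rabs_R0. pose proof (Rabs_pos t). lra.
Qed.

Lemma negsq_nonpos t : t <= 0 -> negsq t = t * t.
Proof. intros. unfold negsq. destruct (Rlt_dec t 0); auto. replace t with 0 by lra. ring. Qed.

Lemma negsq_nonneg t : 0 <= t -> negsq t = 0.
Proof. intros. unfold negsq. destruct (Rlt_dec t 0); auto. lra. Qed.

Definition origin : R2 := (0, 0).

Definition sqnorm (q : R2) : R := fst q * fst q + snd q * snd q.

Definition negsq_sum (q : R2) : R := negsq (fst q) + negsq (snd q).

(* [cutoff origin = 0], since [x / 0 = 0] in [R]. *)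
Definition cutoff (q : R2) : R := negsq_sum q / sqnorm q.

Definition cutoff_grad (q : R2) : R2 :=
  ((negsq' (fst q) * sqnorm q - 2 * fst q * negsq_sum q) / (sqnorm q * sqnorm q),
   (negsq' (snd q) * sqnorm q - 2 * snd q * negsq_sum q) / (sqnorm q * sqnorm q)).

Lemma sqnorm_pos q : q <> origin -> 0 < sqnorm q.
Proof.
  intros H. destruct q as [x y]. unfold sqnorm; simpl.
  destruct (Req_dec x 0); destruct (Req_dec y 0); subst; try nra.
  exfalso; apply H; reflexivity.
Qed.

Lemma dist2_origin_sq q : dist2 q origin * dist2 q origin = sqnorm q.
Proof.
  unfold dist2, origin, sqnorm; simpl. rewrite sqrt_sqrt by nra. ring.
Qed.

Lemma cutoff_bounds q : 0 <= cutoff q <= 1.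
Proof.
  unfold cutoff, negsq_sum. pose proof (negsq_bounds (fst q)). pose proof (negsq_bounds (snd q)).
  destruct (Req_dec (sqnorm q) 0) as [E|N].
  - rewrite E. unfold Rdiv. rewrite Rinv_0. lra.
  - assert (0 < sqnorm q) by (unfold sqnorm in *; nra).
    split; [apply Rdiv_le_0_compat; lra|].
    unfold Rdiv. rewrite <- (Rinv_r (sqnorm q)) by lra.
    apply Rmult_le_compat_r; [left; apply Rinv_0_lt_compat; auto| unfold sqnorm; lra].
Qed.

Lemma cutoff_square0 q : square 0 q -> cutoff q = 0.
Proof.
  intros [[H1 _] [H2 _]]. unfold cutoff, negsq_sum.
  rewrite !negsq_nonneg by auto. unfold Rdiv. ring.
Qed.

Lemma cutoff_square_neg q : square (-1) q -> q <> origin -> cutoff q = 1.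
Proof.
  intros [[_ H1] [_ H2]] N. pose proof (sqnorm_pos q N). unfold cutoff, negsq_sum.
  rewrite !negsq_nonpos by lra. unfold sqnorm in *. field. lra.
Qed.

Lemma grad_sqnorm A q : has_grad_within A sqnorm (2 * fst q, 2 * snd q) q.
Proof.
  eapply grad_eq; [| apply grad_plus; apply grad_mult; auto using grad_fst, grad_snd].
  simpl. f_equal; ring.
Qed.

Lemma cutoff_C1 q : q <> origin -> C1_at (fun _ => True) cutoff cutoff_grad q.
Proof.
  intros N. pose proof (sqnorm_pos q N) as Hs.
  assert (HN : has_grad_within (fun _ => True) negsq_sum (negsq' (fst q), negsq' (snd q)) q).
  { eapply grad_eq; [| apply grad_plus;
      apply grad_comp_real; auto using negsq_deriv, grad_fst, grad_snd].
    simpl. f_equal; ring. }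
  assert (HI : has_grad_within (fun _ => True) (fun y => / sqnorm y)
                 (-1 / (sqnorm q * sqnorm q) * (2 * fst q),
                  -1 / (sqnorm q * sqnorm q) * (2 * snd q)) q).
  { eapply grad_eq;
      [| apply (grad_comp_real _ sqnorm (2 * fst q, 2 * snd q) q Rinv); [| apply grad_sqnorm]];
      [reflexivity|].
    apply is_derive_Reals. auto_derive; [lra| field; lra]. }
  assert (CS := grad_cont _ _ _ _ (grad_sqnorm (fun _ => True) q)).
  assert (CN := grad_cont _ _ _ _ HN).
  split.
  - eapply grad_eq; [| apply (grad_mult _ _ _ _ _ _ HN HI)].
    unfold cutoff_grad. simpl. f_equal; field; lra.
  - assert (CD : cont_within Rdist (fun _ => True) (fun y => / (sqnorm y * sqnorm y)) q).
    { apply cont_inv; [nra| apply cont_mult; auto]. }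
    unfold cutoff_grad, Rdiv, Rminus. apply cont_pair; apply cont_mult; auto;
      apply cont_plus; [apply cont_mult| apply cont_opp; apply cont_mult| apply cont_mult|
                        apply cont_opp; apply cont_mult];
      auto using cont_scale, cont_fst, cont_snd, cont_comp_real, negsq'_cont.
Qed.

Lemma quotient_gradient_bound a x N S r : 0 < r -> r * r = S -> Rabs x <= r -> 0 <= N <= S ->
  Rabs a <= 2 * Rabs x -> Rabs ((a * S - 2 * x * N) / (S * S)) * r <= 4.
Proof.
  intros Hr HS Hx HN Ha. pose proof (Rabs_pos x). pose proof (Rabs_pos a).
  assert (HSp : 0 < S) by (rewrite <- HS; nra).
  assert (HSS : 0 < S * S) by (apply Rmult_lt_0_compat; lra).
  assert (Hnum : Rabs (a * S - 2 * x * N) <= 4 * r * S).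
  { unfold Rminus. eapply Rle_trans; [apply Rabs_triang|].
    rewrite Rabs_Ropp, !Rabs_mult, (Rabs_right S), (Rabs_right N), (Rabs_right 2) by nra.
    assert (Rabs a * S <= 2 * r * S) by (apply Rmult_le_compat_r; nra).
    assert (Rabs x * N <= r * S) by (apply Rmult_le_compat; lra). lra. }
  unfold Rdiv. rewrite Rabs_mult, Rabs_inv, (Rabs_right (S * S)) by lra.
  apply Rle_trans with (4 * r * S * / (S * S) * r).
  - apply Rmult_le_compat_r; [lra|]. apply Rmult_le_compat_r; auto.
    left. apply Rinv_0_lt_compat. lra.
  - right. rewrite <- HS. field. lra.
Qed.

Lemma cutoff_grad_bound q : q <> origin ->
  Rabs (fst (cutoff_grad q)) * dist2 q origin <= 4 /\
  Rabs (snd (cutoff_grad q)) * dist2 q origin <= 4.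
Proof.
  intros N. pose proof (dist2_origin_sq q) as E. pose proof (sqnorm_pos q N).
  assert (Hr : 0 < dist2 q origin) by (pose proof (dist2_ge0 q origin); nra).
  assert (HN : 0 <= negsq_sum q <= sqnorm q).
  { unfold negsq_sum, sqnorm. pose proof (negsq_bounds (fst q)). pose proof (negsq_bounds (snd q)). lra. }
  pose proof (Rabs_fst_le_dist2 q origin). pose proof (Rabs_snd_le_dist2 q origin).
  unfold origin in *; simpl in *. rewrite !Rminus_0_r in *.
  split; apply quotient_gradient_bound; auto using Rabs_negsq'_le.
Qed.

Lemma grad_cutoff_mult_origin g : has_grad_within (fun _ => True) g (0, 0) origin ->
  g origin = 0 -> has_grad_within (fun _ => True) (fun y => cutoff y * g y) (0, 0) origin.
Proof.
  intros H Z eps He. destruct (H eps He) as [d [Hd Hy]]. exists d; split; auto.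
  intros y Ay N Hdy. specialize (Hy y Ay N Hdy). rewrite Z in *.
  unfold inner2, sub2 in *; simpl in *.
  replace (g y - 0 - _) with (g y) in Hy by ring.
  replace (cutoff y * g y - _ - _) with (cutoff y * g y) by ring.
  rewrite Rabs_mult. pose proof (cutoff_bounds y). rewrite (Rabs_right (cutoff y)) by lra.
  pose proof (Rabs_pos (g y)). nra.
Qed.

(* [g] vanishes to first order at the origin, which absorbs the [1 / |y|] growth of [s]. *)
Lemma cont_cutoff_mult_origin (g c s : R2 -> R) :
  has_grad_within (fun _ => True) g (0, 0) origin -> g origin = 0 ->
  cont_within Rdist (fun _ => True) c origin -> c origin = 0 ->
  (forall y, y <> origin -> Rabs (s y) * dist2 y origin <= 4) ->
  cont_within Rdist (fun _ => True) (fun y => g y * s y + cutoff y * c y) origin.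
Proof.
  intros H Z C Zc Bs eps He.
  destruct (C (eps/2) ltac:(lra)) as [d1 [Hd1 Hy1]].
  destruct (grad_remainder_le _ _ _ _ H (eps/8) ltac:(lra)) as [d2 [Hd2 Hy2]].
  exists (Rmin d1 d2); split; [apply Rmin_pos; auto|].
  intros y _ Hdy. apply Rmin_Rgt in Hdy as [Hdy1 Hdy2].
  specialize (Hy1 y I Hdy1). specialize (Hy2 y I Hdy2). unfold Rdist in *.
  rewrite Z, Zc, Rmult_0_l, Rmult_0_r, Rplus_0_r, Rminus_0_r.
  rewrite Zc, Rminus_0_r in Hy1.
  assert (Hg : Rabs (g y) <= eps / 8 * dist2 y origin).
  { eapply Rle_trans; [|exact Hy2]. right. f_equal. rewrite Z. unfold inner2, sub2; simpl. ring. }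
  assert (Hgs : Rabs (g y) * Rabs (s y) <= eps / 8 * 4).
  { destruct (classic (y = origin)) as [->|N].
    - rewrite Z, Rabs_R0. lra.
    - pose proof (Bs y N). pose proof (Rabs_pos (s y)). pose proof (dist2_ge0 y origin).
      apply Rle_trans with (eps / 8 * dist2 y origin * Rabs (s y)); [apply Rmult_le_compat_r; auto|].
      replace (eps / 8 * dist2 y origin * Rabs (s y)) with (eps / 8 * (Rabs (s y) * dist2 y origin))
        by ring.
      apply Rmult_le_compat_l; lra. }
  eapply Rle_lt_trans; [apply Rabs_triang|]. rewrite !Rabs_mult.
  pose proof (cutoff_bounds y). rewrite (Rabs_right (cutoff y)) by lra.
  pose proof (Rabs_pos (c y)). nra.
Qed.

(** * Extension from the bowtie *)

Definition bowtie (q : R2) : Prop := square 0 q \/ square (-1) q.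

Lemma origin_square0 : square 0 origin.
Proof. unfold square, origin; simpl; lra. Qed.

Lemma origin_square_neg : square (-1) origin.
Proof. unfold square, origin; simpl; lra. Qed.

Lemma C1_cutoff_glue g1 dg1 g2 dg2 :
  (forall x, C1_at (fun _ => True) g1 dg1 x) -> (forall x, C1_at (fun _ => True) g2 dg2 x) ->
  g2 origin = 0 -> dg2 origin = (0, 0) ->
  forall x, C1_at (fun _ => True) (fun q => g1 q + cutoff q * g2 q)
    (fun q => add2 (dg1 q) (add2 (scale2 (g2 q) (cutoff_grad q)) (scale2 (cutoff q) (dg2 q)))) x.
Proof.
  intros G1 G2 Z DZ x. apply C1_at_plus; [apply G1|].
  destruct (classic (x = origin)) as [->|N]; [| apply C1_at_mult; auto using cutoff_C1].
  destruct (G2 origin) as [H C]. rewrite DZ in H. split.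
  - eapply grad_eq; [| apply grad_cutoff_mult_origin; auto].
    rewrite Z, DZ. unfold add2, scale2. simpl. f_equal; ring.
  - apply cont_pair; apply cont_cutoff_mult_origin; auto;
      [apply (cont_fst_comp _ _ _ C)| rewrite DZ; reflexivity| intros; apply cutoff_grad_bound; auto|
       apply (cont_snd_comp _ _ _ C)| rewrite DZ; reflexivity| intros; apply cutoff_grad_bound; auto].
Qed.

Lemma bowtie_extension f df : (forall p, bowtie p -> C1_at bowtie f df p) ->
  exists g, C1_plane g /\ forall x, bowtie x -> g x = f x.
Proof.
  intros Hf.
  destruct (ext_square_C1 f df) as [G1 E1].
  { intros p Hp. apply (C1_at_subset bowtie); [intros; left; auto| apply Hf; left; auto]. }
  set (g1 := ext_square f) in *. set (dg1 := ext_square_grad df) in *.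
  set (f2 := fun q => f q + -1 * g1 q).
  set (df2 := fun q => add2 (df q) (scale2 (-1) (dg1 q))).
  destruct (square_neg_extension f2 df2) as [g2 [dg2 [G2 E2]]].
  { intros p Hp. apply C1_at_plus.
    - apply (C1_at_subset bowtie); [intros; right; auto| apply Hf; right; auto].
    - apply C1_at_scale. apply (C1_at_subset (fun _ => True)); auto. }
  destruct (E1 origin origin_square0) as [Eg1 Edg1].
  destruct (E2 origin origin_square_neg) as [Eg2 Edg2].
  exists (fun q => g1 q + cutoff q * g2 q). split.
  - eexists. apply C1_cutoff_glue; auto.
    + rewrite Eg2. unfold f2. rewrite Eg1. ring.
    + rewrite Edg2. unfold df2. rewrite Edg1. unfold add2, scale2. simpl. f_equal; ring.
  - intros x [Hx|Hx].
    + rewrite cutoff_square0 by auto. destruct (E1 x Hx) as [-> _]. ring.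
    + destruct (classic (x = origin)) as [->|N].
      * rewrite Eg2. unfold f2. rewrite Eg1. ring.
      * rewrite cutoff_square_neg by auto. destruct (E2 x Hx) as [-> _]. unfold f2. ring.
Qed.

(** * The Whitney estimate from interior differentiability *)

Definition seg (a b : R2) (s : R) : R2 :=
  (fst a + s * (fst b - fst a), snd a + s * (snd b - snd a)).

Lemma seg_0 a b : seg a b 0 = a.
Proof. unfold seg. destruct a; simpl. f_equal; ring. Qed.

Lemma seg_1 a b : seg a b 1 = b.
Proof. unfold seg. destruct a, b; simpl. f_equal; ring. Qed.

Lemma dist2_scale l u v w z : fst u - fst v = l * (fst w - fst z) ->
  snd u - snd v = l * (snd w - snd z) -> dist2 u v = Rabs l * dist2 w z.
Proof.
  intros E1 E2. unfold dist2. rewrite E1, E2.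
  replace ((l * (fst w - fst z)) ^ 2 + (l * (snd w - snd z)) ^ 2)
    with (l ^ 2 * ((fst w - fst z) ^ 2 + (snd w - snd z) ^ 2)) by ring.
  rewrite sqrt_mult_alt by nra. rewrite <- pow2_abs, sqrt_pow2 by apply Rabs_pos. reflexivity.
Qed.

Lemma dist2_seg a b s t : dist2 (seg a b s) (seg a b t) = Rabs (s - t) * dist2 b a.
Proof. apply dist2_scale; unfold seg; simpl; ring. Qed.

Lemma dist2_seg_0 a b s : dist2 (seg a b s) a = Rabs s * dist2 b a.
Proof. apply dist2_scale; unfold seg; simpl; ring. Qed.

Lemma dist2_seg_le p q x s : 0 <= s <= 1 ->
  dist2 (seg p q s) x <= (1 - s) * dist2 p x + s * dist2 q x.
Proof.
  intros Hs. eapply Rle_trans; [apply (dist2_triangle _ (seg x q s))|].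
  rewrite (dist2_scale (1 - s) (seg p q s) (seg x q s) p x), (dist2_seg_0 x q s)
    by (unfold seg; simpl; ring).
  rewrite !Rabs_right by lra. lra.
Qed.

Lemma seg_deriv f d a b s : has_grad_within (fun _ => True) f d (seg a b s) ->
  derivable_pt_lim (fun u => f (seg a b u)) s (inner2 d (sub2 b a)).
Proof.
  intros H eps He.
  set (w := dist2 b a). assert (Hw : 0 <= w) by apply dist2_ge0.
  destruct (grad_remainder_le _ _ _ _ H (eps / (2 * (w + 1)))) as [del [Hd Hy]];
    [apply Rdiv_lt_0_compat; lra|].
  assert (Hdel : 0 < del / (w + 1)) by (apply Rdiv_lt_0_compat; lra).
  exists (mkposreal _ Hdel). intros h Hh Hhd. simpl in Hhd.
  assert (0 < Rabs h) by (apply Rabs_pos_lt; auto).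
  assert (Dh : dist2 (seg a b (s + h)) (seg a b s) = Rabs h * w)
    by (rewrite dist2_seg; f_equal; f_equal; ring).
  assert (Hlt : Rabs h * w < del).
  { apply Rle_lt_trans with (Rabs h * (w + 1)); [apply Rmult_le_compat_l; lra|].
    apply (Rmult_lt_compat_r (w + 1)) in Hhd; [|lra].
    unfold Rdiv in Hhd. rewrite Rmult_assoc, Rinv_l, Rmult_1_r in Hhd; lra. }
  specialize (Hy _ I ltac:(rewrite Dh; exact Hlt)). rewrite Dh in Hy.
  replace (inner2 d (sub2 (seg a b (s + h)) (seg a b s))) with (h * inner2 d (sub2 b a)) in Hy
    by (unfold inner2, sub2, seg; simpl; ring).
  replace ((f (seg a b (s + h)) - f (seg a b s)) / h - inner2 d (sub2 b a))
    with ((f (seg a b (s + h)) - f (seg a b s) - h * inner2 d (sub2 b a)) / h) by (field; auto).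
  unfold Rdiv. rewrite Rabs_mult, Rabs_inv.
  apply Rle_lt_trans with (eps / (2 * (w + 1)) * (Rabs h * w) * / Rabs h).
  { apply Rmult_le_compat_r; auto. left; apply Rinv_0_lt_compat; auto. }
  replace (eps / (2 * (w + 1)) * (Rabs h * w) * / Rabs h) with (eps * (w / (2 * (w + 1))))
    by (field; lra).
  assert (w / (2 * (w + 1)) < 1).
  { assert (E : w / (2 * (w + 1)) * (2 * (w + 1)) = w) by (field; lra). nra. }
  nra.
Qed.

Lemma mean_value_estimate f df a b v M :
  (forall s, 0 <= s <= 1 -> has_grad_within (fun _ => True) f (df (seg a b s)) (seg a b s)) ->
  (forall s, 0 <= s <= 1 -> norm1 (sub2 (df (seg a b s)) v) <= M) ->
  Rabs (f b - f a - inner2 v (sub2 b a)) <= M * dist2 b a.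
Proof.
  intros Hd HM.
  set (K := inner2 v (sub2 b a)).
  destruct (MVT_cor2 (fun u => f (seg a b u) - K * u)
              (fun u => inner2 (df (seg a b u)) (sub2 b a) - K) 0 1) as [s [E Hs]]; [lra| |].
  { intros u Hu. apply (derivable_pt_lim_minus (fun u => f (seg a b u)) (fun u => K * u)).
    - apply seg_deriv, Hd. lra.
    - apply is_derive_Reals. auto_derive; [auto| ring]. }
  rewrite seg_0, seg_1 in E.
  replace (f b - f a - K) with (f b - K * 1 - (f a - K * 0)) by ring. rewrite E.
  replace ((inner2 (df (seg a b s)) (sub2 b a) - K) * (1 - 0))
    with (inner2 (sub2 (df (seg a b s)) v) (sub2 b a)) by (unfold K, inner2, sub2; simpl; ring).
  eapply Rle_trans; [apply Rabs_inner2_le|].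
  apply Rmult_le_compat_r; [apply dist2_ge0| apply HM; lra].
Qed.

Lemma estimate_by_approximation (f : R2 -> R) v M a b : 0 <= M ->
  (forall eta, 0 < eta -> exists a' b',
     Rabs (f a' - f a) < eta /\ Rabs (f b' - f b) < eta /\ dist2 a' a < eta /\ dist2 b' b < eta /\
     Rabs (f b' - f a' - inner2 v (sub2 b' a')) <= M * dist2 b' a') ->
  Rabs (f b - f a - inner2 v (sub2 b a)) <= M * dist2 b a.
Proof.
  intros HM Happrox. apply Rle_plus_epsilon. intros e He.
  pose proof (norm1_ge0 v).
  set (L := 2 * M + 2 * norm1 v + 2).
  destruct (Happrox (e / L)) as [a' [b' [Fa [Fb [Da [Db Est]]]]]];
    [apply Rdiv_lt_0_compat; unfold L; lra|].
  assert (EL : e / L * L = e) by (field; unfold L; lra).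
  assert (Dba : dist2 b' a' <= dist2 b a + 2 * (e / L)).
  { pose proof (dist2_triangle b' b a'). pose proof (dist2_triangle b a a').
    rewrite (dist2_sym a a') in *. lra. }
  pose proof (Rabs_inner2_le v b' b). pose proof (Rabs_inner2_le v a' a).
  set (E := f b' - f a' - inner2 v (sub2 b' a')) in Est.
  set (X := f b' - f b) in Fb. set (Y := f a' - f a) in Fa.
  set (P := inner2 v (sub2 b' b)) in *. set (Q := inner2 v (sub2 a' a)) in *.
  replace (f b - f a - inner2 v (sub2 b a)) with (E - X + Y + P - Q)
    by (unfold E, X, Y, P, Q, inner2, sub2; simpl; ring).
  unfold Rminus.
  pose proof (Rabs_triang (E + - X + Y + P) (- Q)). pose proof (Rabs_triang (E + - X + Y) P).
  pose proof (Rabs_triang (E + - X) Y). pose proof (Rabs_triang E (- X)).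
  rewrite !Rabs_Ropp in *.
  assert (M * dist2 b' a' <= M * dist2 b a + M * (2 * (e / L))) by nra.
  assert (norm1 v * dist2 b' b <= norm1 v * (e / L)) by (apply Rmult_le_compat_l; lra).
  assert (norm1 v * dist2 a' a <= norm1 v * (e / L)) by (apply Rmult_le_compat_l; lra).
  set (u := e / L) in *. unfold L in EL. lra.
Qed.

Definition open_square (c : R) (q : R2) : Prop := c < fst q < c + 1 /\ c < snd q < c + 1.

Definition square_center (c : R) : R2 := (c + 1/2, c + 1/2).

Lemma open_square_square c q : open_square c q -> square c q.
Proof. unfold open_square, square. intros. lra. Qed.

Lemma lt_convex lo x y s : lo < x -> lo < y -> 0 <= s <= 1 -> lo < x + s * (y - x).
Proof. intros. destruct (Rlt_or_le s 1); nra. Qed.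

Lemma open_square_seg c a b s : open_square c a -> open_square c b -> 0 <= s <= 1 ->
  open_square c (seg a b s).
Proof.
  unfold open_square, seg; simpl. intros [[? ?] [? ?]] [[? ?] [? ?]] Hs.
  pose proof (lt_convex (- (c + 1)) (- fst a) (- fst b) s).
  pose proof (lt_convex (- (c + 1)) (- snd a) (- snd b) s).
  repeat split; try apply lt_convex; auto; nra.
Qed.

Lemma square_shrink c a t : square c a -> 0 < t <= 1 -> open_square c (seg a (square_center c) t).
Proof. unfold square, open_square, seg, square_center; simpl. intros. repeat split; nra. Qed.

Lemma dist2_square_center c a : square c a -> dist2 a (square_center c) <= 1.
Proof.
  intros [[? ?] [? ?]]. eapply Rle_trans; [apply dist2_le_l1|]. unfold square_center; simpl.
  assert (Rabs (fst a - (c + 1/2)) <= 1/2) by (apply Rabs_le; lra).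
  assert (Rabs (snd a - (c + 1/2)) <= 1/2) by (apply Rabs_le; lra). lra.
Qed.

Lemma dist2_square_shrink c a t : square c a -> 0 <= t -> dist2 (seg a (square_center c) t) a <= t.
Proof.
  intros Ha Ht. rewrite dist2_seg_0, Rabs_right by lra. rewrite dist2_sym.
  pose proof (dist2_square_center c a Ha). nra.
Qed.

Lemma square_chord_estimate f df c x v M rho a b :
  (forall z, open_square c z -> has_grad_within (fun _ => True) f (df z) z) ->
  (forall q, square c q -> cont_within Rdist (square c) f q) ->
  (forall z, square c z -> dist2 z x < rho -> norm1 (sub2 (df z) v) <= M) ->
  square c a -> square c b -> dist2 a x < rho / 2 -> dist2 b x < rho / 2 -> 0 <= M ->
  Rabs (f b - f a - inner2 v (sub2 b a)) <= M * dist2 b a.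
Proof.
  intros Hd Hc HM Ha Hb Da Db HM0.
  apply estimate_by_approximation; auto. intros eta He.
  destruct (Hc a Ha eta He) as [da [Hda Ca]]. destruct (Hc b Hb eta He) as [db [Hdb Cb]].
  assert (Hrho : 0 < rho) by (pose proof (dist2_ge0 a x); lra).
  assert (0 < Rmin da db) by (apply Rmin_pos; auto).
  destruct (Rmin_pos4 1 (rho / 4) (eta / 2) (Rmin da db / 2)) as [t [Ht [Ht1 [Htr [Hte Htd]]]]];
    try lra.
  pose proof (Rmin_l da db). pose proof (Rmin_r da db).
  set (a' := seg a (square_center c) t). set (b' := seg b (square_center c) t).
  assert (Oa : open_square c a') by (apply square_shrink; auto; lra).
  assert (Ob : open_square c b') by (apply square_shrink; auto; lra).
  assert (Da' : dist2 a' a <= t) by (apply dist2_square_shrink; auto; lra).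
  assert (Db' : dist2 b' b <= t) by (apply dist2_square_shrink; auto; lra).
  exists a', b'. repeat split.
  - apply Ca; [apply open_square_square; auto| lra].
  - apply Cb; [apply open_square_square; auto| lra].
  - lra.
  - lra.
  - apply (mean_value_estimate f df); intros s Hs.
    + apply Hd, open_square_seg; auto.
    + apply HM; [apply open_square_square, open_square_seg; auto|].
      eapply Rle_lt_trans; [apply dist2_seg_le; auto|].
      pose proof (dist2_triangle a' a x). pose proof (dist2_triangle b' b x). nra.
Qed.

Lemma open_square_interior c z : open_square c z -> interior2 (square c) z.
Proof.
  intros [[H1 H2] [H3 H4]].
  destruct (Rmin_pos4 (fst z - c) (c + 1 - fst z) (snd z - c) (c + 1 - snd z)) as [r [Hr Hle]];
    try lra.
  exists r. split; auto. intros y Hy. rewrite dist2_sym in Hy.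
  pose proof (fst_le_dist2 y z). pose proof (snd_le_dist2 y z). unfold square. lra.
Qed.

Lemma interior2_mono (A B : R2 -> Prop) z : (forall y, A y -> B y) -> interior2 A z -> interior2 B z.
Proof. intros S [r [Hr H]]. exists r. split; auto. Qed.

Lemma square_dist2_origin x y : square 0 x -> square (-1) y ->
  dist2 x origin <= dist2 y x /\ dist2 y origin <= dist2 y x.
Proof.
  unfold square, dist2, origin; simpl. intros [[? ?] [? ?]] [[? ?] [? ?]].
  split; apply sqrt_le_1_alt; nra.
Qed.

Lemma estimate_through_origin (f : R2 -> R) v M a b : 0 <= M ->
  Rabs (f a - f origin - inner2 v (sub2 a origin)) <= M * dist2 a origin ->
  Rabs (f b - f origin - inner2 v (sub2 b origin)) <= M * dist2 b origin ->
  dist2 a origin <= dist2 b a -> dist2 b origin <= dist2 b a ->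
  Rabs (f b - f a - inner2 v (sub2 b a)) <= 2 * M * dist2 b a.
Proof.
  intros HM Ha Hb Da Db.
  replace (f b - f a - inner2 v (sub2 b a))
    with ((f b - f origin - inner2 v (sub2 b origin)) - (f a - f origin - inner2 v (sub2 a origin)))
    by (unfold inner2, sub2, origin; simpl; ring).
  unfold Rminus at 1. eapply Rle_trans; [apply Rabs_triang|]. rewrite Rabs_Ropp.
  assert (M * dist2 a origin <= M * dist2 b a) by (apply Rmult_le_compat_l; auto).
  assert (M * dist2 b origin <= M * dist2 b a) by (apply Rmult_le_compat_l; auto).
  lra.
Qed.

Definition bowtie_index (c : R) : Prop := c = 0 \/ c = -1.

Lemma bowtie_square q : bowtie q <-> exists c, bowtie_index c /\ square c q.
Proof.
  split.
  - intros [H|H]; [exists 0| exists (-1)]; split; auto; [left| right]; reflexivity.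
  - intros [c [[-> | ->] H]]; [left| right]; auto.
Qed.

Lemma origin_square c : bowtie_index c -> square c origin.
Proof. intros [-> | ->]; [apply origin_square0| apply origin_square_neg]. Qed.

Lemma bowtie_grad_of_C1_int f df :
  (forall z, interior2 bowtie z -> has_grad_within (fun _ => True) f (df z) z) ->
  (forall q, bowtie q -> cont_within Rdist bowtie f q) ->
  (forall q, bowtie q -> cont_within dist2 bowtie df q) ->
  forall x, bowtie x -> has_grad_within bowtie f (df x) x.
Proof.
  intros Hd Hc HC x Hx eps He.
  destruct (HC x Hx (eps/4) ltac:(lra)) as [rho [Hrho Hr]].
  assert (Est : forall c a b, bowtie_index c -> square c a -> square c b ->
            dist2 a x < rho / 2 -> dist2 b x < rho / 2 ->
            Rabs (f b - f a - inner2 (df x) (sub2 b a)) <= eps / 2 * dist2 b a).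
  { intros c a b Ic Ha Hb Da Db. apply (square_chord_estimate f df c x (df x) (eps / 2) rho); auto; try lra.
    - intros z Hz. apply Hd. apply (interior2_mono (square c)), open_square_interior; auto.
      intros y Hy. apply bowtie_square. eauto.
    - intros q Hq. apply (cont_subset _ bowtie); [intros y Hy; apply bowtie_square; eauto|].
      apply Hc, bowtie_square. eauto.
    - intros z Hz Dz. pose proof (norm1_sub2_le (df z) (df x)).
      assert (Bz : bowtie z) by (apply bowtie_square; eauto). specialize (Hr z Bz Dz). lra. }
  exists (rho / 2). split; [lra|]. intros y Hy _ Dyx.
  assert (Dxx : dist2 x x < rho / 2) by (rewrite dist2_xx; lra).
  pose proof (dist2_ge0 y x).
  apply bowtie_square in Hx as [cx [Ix Sx]]. apply bowtie_square in Hy as [cy [Iy Sy]].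
  destruct (Req_dec cx cy) as [<-|N].
  - eapply Rle_trans; [apply (Est cx); auto| nra].
  - assert (Cross : dist2 x origin <= dist2 y x /\ dist2 y origin <= dist2 y x).
    { destruct Ix as [-> | ->], Iy as [-> | ->]; try lra.
      - apply square_dist2_origin; auto.
      - rewrite (dist2_sym y x). apply and_comm, square_dist2_origin; auto. }
    destruct Cross as [C1 C2].
    assert (Do : dist2 origin x < rho / 2) by (rewrite dist2_sym; lra).
    replace (eps * dist2 y x) with (2 * (eps / 2) * dist2 y x) by field.
    apply estimate_through_origin; try lra;
      [apply (Est cx)| apply (Est cy)]; auto using origin_square.
Qed.

Lemma bowtie_C1_equiv f :
  (C1_int bowtie f <-> C1_K bowtie f) /\ (C1_K bowtie f <-> C1_restr bowtie f).
Proof.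
  split; split.
  - intros [df [Hd [Hc HC]]]. exists df. intros x Hx. split; auto. apply bowtie_grad_of_C1_int; auto.
  - intros [df H]. exists df. split; [|split].
    + intros x [r [Hr Hb]].
      assert (Hx : bowtie x) by (apply Hb; rewrite dist2_xx; auto).
      apply (grad_interior bowtie f (df x) x r); auto. apply H; auto.
    + intros x Hx. apply (grad_cont _ _ (df x)). apply H; auto.
    + intros x Hx. apply H; auto.
  - intros [df H]. apply (bowtie_extension f df). exact H.
  - intros [g [[dg Hg] E]]. exists dg. intros x Hx.
    change (C1_at bowtie f dg x).
    apply (C1_at_ext bowtie g f dg dg x).
    + intros y Hy. split; [symmetry|]; auto.
    + split; [symmetry|]; auto.
    + apply (C1_at_subset (fun _ => True)); [auto| apply Hg].
Qed.

(** * Topology of the bowtie *)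

Lemma real_induction (a b : R) (C : R -> Prop) : a <= b -> C a ->
  (forall s, a <= s <= b -> exists r, 0 < r /\ forall t1 t2, a <= t1 -> s - r < t1 -> t1 <= s ->
     C t1 -> s <= t2 -> t2 < s + r -> t2 <= b -> C t2) ->
  C b.
Proof.
  intros Hab Ca Loc.
  set (E := fun t => a <= t <= b /\ C t).
  destruct (completeness E) as [m [Ub Lub]]; [exists b; intros t [Ht _]; lra| exists a; split; auto; lra|].
  assert (Ham : a <= m) by (apply Ub; split; auto; lra).
  assert (Hmb : m <= b) by (apply Lub; intros t [Ht _]; lra).
  destruct (Loc m (conj Ham Hmb)) as [r [Hr L]].
  assert (Ex : exists t1, E t1 /\ m - r < t1).
  { apply NNPP. intros N. assert (m <= m - r); [|lra].
    apply Lub. intros t Et. apply Rnot_lt_le. intros Hlt. apply N. exists t; auto. }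
  destruct Ex as [t1 [[Ht1 Ct1] Ht1']].
  assert (t1 <= m) by (apply Ub; split; auto).
  destruct (Req_dec m b) as [<-|N]; [apply (L t1 m); auto; lra|].
  set (t2 := Rmin (m + r/2) b).
  assert (m < t2) by (unfold t2; apply Rmin_glb_lt; lra).
  assert (t2 <= b) by apply Rmin_r.
  assert (t2 <= m + r / 2) by apply Rmin_l.
  assert (E t2) by (split; [lra| apply (L t1 t2); auto; lra]).
  specialize (Ub t2 H3). lra.
Qed.

Definition covered {I : Type} (U : I -> R2 -> Prop) (l : list I) (P : R2 -> Prop) : Prop :=
  forall p, P p -> exists i, In i l /\ U i p.

Lemma covered_app {I : Type} (U : I -> R2 -> Prop) l1 l2 (P1 P2 : R2 -> Prop) :
  covered U l1 P1 -> covered U l2 P2 -> covered U (l1 ++ l2) (fun p => P1 p \/ P2 p).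
Proof.
  intros C1 C2 p [Hp|Hp]; [destruct (C1 p Hp) as [i [Hi Ui]]| destruct (C2 p Hp) as [i [Hi Ui]]];
    exists i; split; auto; apply in_or_app; auto.
Qed.

Lemma covered_subset {I : Type} (U : I -> R2 -> Prop) l (P Q : R2 -> Prop) :
  (forall p, Q p -> P p) -> covered U l P -> covered U l Q.
Proof. intros S C p Hp. apply C, S, Hp. Qed.

Lemma open_box (U : R2 -> Prop) z r : 0 < r -> (forall y, dist2 z y < r -> U y) ->
  forall p, Rabs (fst p - fst z) < r / 2 -> Rabs (snd p - snd z) < r / 2 -> U p.
Proof.
  intros Hr Hb p H1 H2. apply Hb. rewrite dist2_sym. eapply Rle_lt_trans; [apply dist2_le_l1|]. lra.
Qed.

Section SquareCompact.

Variables (c : R) (I : Type) (U : I -> R2 -> Prop).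
Hypothesis U_open : forall i, is_open (U i).
Hypothesis U_cover : forall x, square c x -> exists i, U i x.

Lemma square_row_cover y0 : c <= y0 <= c + 1 -> exists eta, 0 < eta /\ exists l,
  covered U l (fun p => square c p /\ Rabs (snd p - y0) <= eta).
Proof.
  intros Hy0.
  set (C := fun t => exists eta, 0 < eta /\ exists l,
    covered U l (fun p => c <= fst p <= t /\ Rabs (snd p - y0) <= eta /\ c <= snd p <= c + 1)).
  assert (Cf : C (c + 1)).
  { apply (real_induction c (c + 1)); [lra| |].
    - destruct (U_cover (c, y0)) as [i0 Hi0]; [unfold square; simpl; lra|].
      destruct (U_open i0 _ Hi0) as [r0 [Hr0 Hb0]].
      exists (r0 / 4). split; [lra|]. exists (i0 :: nil). intros p [Hp1 [Hp2 Hp3]].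
      exists i0. split; [left; auto|]. apply (open_box _ _ r0 Hr0 Hb0); simpl; [|lra].
      replace (fst p - c) with 0 by lra. rewrite Rabs_R0. lra.
    - intros s Hs. destruct (U_cover (s, y0)) as [i Hi]; [unfold square; simpl; lra|].
      destruct (U_open i _ Hi) as [r [Hr Hb]].
      exists (r / 2). split; [lra|]. intros t1 t2 Ht1 Ht1' Ht1'' [eta1 [He1 [l1 Cov1]]] Ht2 Ht2' _.
      exists (Rmin eta1 (r / 4)). split; [apply Rmin_pos; lra|]. exists (i :: l1).
      intros p [Hp1 [Hp2 Hp3]]. pose proof (Rmin_l eta1 (r/4)). pose proof (Rmin_r eta1 (r/4)).
      destruct (Rle_dec (fst p) t1).
      + destruct (Cov1 p) as [j [Hj Uj]]; [repeat split; lra|]. exists j. split; [right|]; auto.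
      + exists i. split; [left; auto|].
        apply (open_box _ _ r Hr Hb); simpl; [apply Rabs_def1|]; lra. }
  destruct Cf as [eta [He [l Cov]]]. exists eta. split; auto. exists l.
  eapply covered_subset; [|exact Cov]. intros p [[Hp1 Hp2] Hp3]. repeat split; lra.
Qed.

Lemma square_finite_cover : exists l, covered U l (square c).
Proof.
  set (C := fun t => exists l, covered U l (fun p => c <= fst p <= c + 1 /\ c <= snd p <= t)).
  assert (Cf : C (c + 1)).
  { apply (real_induction c (c + 1)); [lra| |].
    - destruct (square_row_cover c) as [eta [He [l Cov]]]; [lra|].
      exists l. eapply covered_subset; [|exact Cov]. intros p [Hp1 Hp2].
      repeat split; try lra. replace (snd p - c) with 0 by lra. rewrite Rabs_R0. lra.
    - intros s Hs. destruct (square_row_cover s Hs) as [eta [He [ls Covs]]].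
      exists eta. split; auto. intros t1 t2 Ht1 Ht1' Ht1'' [l1 Cov1] Ht2 Ht2' Ht2b.
      exists (l1 ++ ls). eapply covered_subset; [|apply covered_app; [exact Cov1| exact Covs]].
      intros p [Hp1 Hp2]. destruct (Rle_dec (snd p) t1); [left; split; auto; lra|].
      right. repeat split; try lra. left. apply Rabs_def1; lra. }
  exact Cf.
Qed.

End SquareCompact.

Lemma bowtie_compact : compact2 bowtie.
Proof.
  intros I U Hop Hcov.
  destruct (square_finite_cover 0 I U Hop) as [l1 C1]; [intros x Hx; apply Hcov; left; auto|].
  destruct (square_finite_cover (-1) I U Hop) as [l2 C2]; [intros x Hx; apply Hcov; right; auto|].
  exists (l1 ++ l2). apply covered_app; auto.
Qed.

Lemma star_shaped_open_cover (K U V : R2 -> Prop) c : is_open U -> is_open V ->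
  (forall x s, K x -> 0 <= s <= 1 -> K (seg c x s)) ->
  (forall x, K x -> U x \/ V x) -> (forall x, K x -> U x -> V x -> False) ->
  U c -> forall x, K x -> U x.
Proof.
  intros HU HV Star Cov Dis Uc x Kx.
  set (w := dist2 x c). assert (Hw : 0 <= w) by apply dist2_ge0.
  assert (Near : forall r s0 t, 0 < r -> Rabs (s0 - t) < r / (w + 1) ->
            dist2 (seg c x s0) (seg c x t) < r).
  { intros r s0 t Hr Ht. rewrite dist2_seg. fold w.
    apply Rle_lt_trans with (r / (w + 1) * w); [apply Rmult_le_compat_r; lra|].
    assert (E : r / (w + 1) * (w + 1) = r) by (field; lra).
    assert (0 < r / (w + 1)) by (apply Rdiv_lt_0_compat; lra). nra. }
  set (C := fun t => forall s, 0 <= s <= t -> U (seg c x s)).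
  assert (C1 : C 1).
  { apply (real_induction 0 1); [lra| intros s Hs; replace s with 0 by lra; rewrite seg_0; auto|].
    intros s0 Hs0. assert (Kz : K (seg c x s0)) by auto.
    destruct (Cov _ Kz) as [Uz|Vz]; [destruct (HU _ Uz) as [r [Hr Hb]]| destruct (HV _ Vz) as [r [Hr Hb]]];
      exists (r / (w + 1)); (split; [apply Rdiv_lt_0_compat; lra|]);
      intros t1 t2 Ht1 Ht1' Ht1'' Ct1 Ht2 Ht2' Ht2b.
    - intros s Hs. destruct (Rle_dec s t1); [apply Ct1; lra|].
      apply Hb, Near; auto. apply Rabs_def1; lra.
    - exfalso. apply (Dis (seg c x t1)); [apply Star; auto; lra| apply Ct1; lra|].
      apply Hb, Near; auto. apply Rabs_def1; lra. }
  rewrite <- (seg_1 c x). apply C1. lra.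
Qed.

Lemma star_shaped_connected (K : R2 -> Prop) c : K c ->
  (forall x s, K x -> 0 <= s <= 1 -> K (seg c x s)) -> connected2 K.
Proof.
  intros Kc Star U V HU HV Cov Dis.
  destruct (Cov c Kc) as [Uc|Vc]; [left| right].
  - apply (star_shaped_open_cover K U V c); auto.
  - apply (star_shaped_open_cover K V U c); auto.
    + intros x Kx. destruct (Cov x Kx); auto.
    + intros x Kx H1 H2. apply (Dis x Kx H2 H1).
Qed.

Lemma bowtie_connected : connected2 bowtie.
Proof.
  apply (star_shaped_connected _ origin); [left; apply origin_square0|].
  unfold bowtie, square, seg, origin; simpl.
  intros x s [[[? ?] [? ?]]|[[? ?] [? ?]]] ?; [left| right]; repeat split; nra.
Qed.

Lemma square_closed c x : closure2 (square c) x -> square c x.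
Proof.
  intros H. unfold square. repeat split; apply Rnot_lt_le; intros Hlt.
  - destruct (H (c - fst x)) as [y [[[? ?] _] D]]; [lra|]. pose proof (fst_le_dist2 x y). lra.
  - destruct (H (fst x - (c + 1))) as [y [[[? ?] _] D]]; [lra|]. pose proof (fst_le_dist2 x y). lra.
  - destruct (H (c - snd x)) as [y [[_ [? ?]] D]]; [lra|]. pose proof (snd_le_dist2 x y). lra.
  - destruct (H (snd x - (c + 1))) as [y [[_ [? ?]] D]]; [lra|]. pose proof (snd_le_dist2 x y). lra.
Qed.

Lemma closure2_union (A B : R2 -> Prop) x : closure2 (fun y => A y \/ B y) x ->
  closure2 A x \/ closure2 B x.
Proof.
  intros H. apply NNPP. intros N. apply not_or_and in N as [NA NB].
  apply not_all_ex_not in NA as [r1 NA]. apply not_all_ex_not in NB as [r2 NB].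
  apply imply_to_and in NA as [Hr1 NA]. apply imply_to_and in NB as [Hr2 NB].
  destruct (H (Rmin r1 r2) (Rmin_pos _ _ Hr1 Hr2)) as [y [[Ay|By] D]].
  - apply NA. exists y. split; auto. eapply Rlt_le_trans; [exact D| apply Rmin_l].
  - apply NB. exists y. split; auto. eapply Rlt_le_trans; [exact D| apply Rmin_r].
Qed.

Lemma closure2_mono (A B : R2 -> Prop) x : (forall y, A y -> B y) -> closure2 A x -> closure2 B x.
Proof. intros S H r Hr. destruct (H r Hr) as [y [Ay D]]. exists y. auto. Qed.

Lemma bowtie_regular : topologically_regular bowtie.
Proof.
  intros x. split.
  - intros Hx r Hr. apply bowtie_square in Hx as [c [Ic Sc]].
    set (t := Rmin (1/2) (r/2)).
    assert (Ht : 0 < t) by (apply Rmin_pos; lra).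
    assert (Ht1 : t <= 1/2) by apply Rmin_l. assert (Ht2 : t <= r/2) by apply Rmin_r.
    exists (seg x (square_center c) t). split.
    + apply (interior2_mono (square c)); [intros y Hy; apply bowtie_square; eauto|].
      apply open_square_interior, square_shrink; auto. lra.
    + rewrite dist2_sym. pose proof (dist2_square_shrink c x t Sc). lra.
  - intros H. assert (Hc : closure2 bowtie x).
    { apply (closure2_mono (interior2 bowtie)); auto.
      intros y [r [Hr Hb]]. apply Hb. rewrite dist2_xx. auto. }
    destruct (closure2_union _ _ _ Hc); [left| right]; apply square_closed; auto.
Qed.

Definition clamp01 (t : R) : R := Rmax 0 (Rmin t 1).

Lemma clamp01_range t : 0 <= clamp01 t <= 1.
Proof. unfold clamp01, Rmax, Rmin. destruct (Rle_dec t 1); destruct (Rle_dec 0 _); lra. Qed.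

Lemma clamp01_id t : 0 <= t <= 1 -> clamp01 t = t.
Proof. intros. unfold clamp01, Rmax, Rmin. destruct (Rle_dec t 1); [|lra]. destruct (Rle_dec 0 t); lra. Qed.

Lemma clamp01_lipschitz u t : Rabs (clamp01 u - clamp01 t) <= Rabs (u - t).
Proof.
  unfold clamp01, Rmax, Rmin. destruct (Rle_dec u 1); destruct (Rle_dec t 1);
  repeat match goal with |- context [Rle_dec ?a ?b] => destruct (Rle_dec a b) end;
  unfold Rabs; repeat match goal with |- context [Rcase_abs ?a] => destruct (Rcase_abs a) end; lra.
Qed.

Lemma path_crosses_axis gamma : continuous_path gamma ->
  0 < fst (gamma 0) -> fst (gamma 1) < 0 -> exists t, 0 <= t <= 1 /\ fst (gamma t) = 0.
Proof.
  intros Hc H0 H1.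
  set (phi := fun t => - fst (gamma (clamp01 t))).
  assert (Cphi : continuity phi).
  { intros t. unfold continuity_pt, continue_in, limit1_in, limit_in. intros eps He. simpl.
    destruct (Hc (clamp01 t) (clamp01_range t) eps He) as [del [Hd Hdel]].
    exists del. split; auto. intros x [_ Hx]. unfold Rfunctions.Rdist in *.
    pose proof (clamp01_lipschitz x t).
    specialize (Hdel (clamp01 x) (clamp01_range x) ltac:(lra)).
    unfold phi. rewrite Rabs_minus_sym.
    replace (- fst (gamma (clamp01 t)) - - fst (gamma (clamp01 x)))
      with (fst (gamma (clamp01 x)) - fst (gamma (clamp01 t))) by ring.
    eapply Rle_lt_trans; [apply Rabs_fst_le_dist2| auto]. }
  destruct (IVT phi 0 1 Cphi) as [z [Hz Ez]]; unfold phi in *; rewrite ?clamp01_id in * by lra;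
    try lra.
  exists z. split; auto. lra.
Qed.

Lemma interior_bowtie_fst q : interior2 bowtie q -> fst q <> 0.
Proof.
  intros [r [Hr Hb]] E.
  set (y := if Rle_dec 0 (snd q) then (- (r/4), snd q + r/4) else (r/4, snd q - r/4)).
  assert (Hy : bowtie y).
  { apply Hb. eapply Rle_lt_trans; [apply dist2_le_l1|].
    unfold y. destruct (Rle_dec 0 (snd q)); simpl; rewrite E;
      match goal with |- Rabs ?A + Rabs ?B < _ =>
        assert (Rabs A <= r / 4) by (apply Rabs_le; lra);
        assert (Rabs B <= r / 4) by (apply Rabs_le; lra) end; lra. }
  unfold y, bowtie, square in Hy. destruct (Rle_dec 0 (snd q)); simpl in Hy; lra.
Qed.

Lemma bowtie_not_whitney : ~ whitney_regular (interior2 bowtie).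
Proof.
  intros [C [HC H]].
  assert (Ix : interior2 bowtie (1/2, 1/2)).
  { apply (interior2_mono (square 0)); [intros; left; auto|].
    apply open_square_interior. unfold open_square; simpl; lra. }
  assert (Iy : interior2 bowtie (-1/2, -1/2)).
  { apply (interior2_mono (square (-1))); [intros; right; auto|].
    apply open_square_interior. unfold open_square; simpl; lra. }
  destruct (H _ _ Ix Iy) as [gamma [Hc [H0 [H1 [Hin _]]]]].
  destruct (path_crosses_axis gamma Hc) as [t [Ht E]]; [rewrite H0; simpl; lra| rewrite H1; simpl; lra|].
  apply (interior_bowtie_fst (gamma t)); auto.
Qed.

Theorem mainTheorem15 :
  exists K : R2 -> Prop,
    compact2 K /\ connected2 K /\ topologically_regular K /\
    ~ whitney_regular (interior2 K) /\
    (forall f : R2 -> R, (C1_int K f <-> C1_K K f) /\ (C1_K K f <-> C1_restr K f)).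
Proof.
  exists bowtie.
  split; [apply bowtie_compact|]. split; [apply bowtie_connected|].
  split; [apply bowtie_regular|]. split; [apply bowtie_not_whitney|].
  apply bowtie_C1_equiv.
Qed.
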